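(* Let $G$ be a group with a conjugation-closed generating set $X$ and let $g\in\mathrm{Mon}(X)$. The order complex $O_g$ of the interval $[1,g]$, with the orthoscheme metric, is isometric to the space $\mathrm{WFact}(G,g,\mathbf I)$ of weighted linear factorizations of $g$.
   Context: $\mathrm{Mon}(X)$ is the generated submonoid; $\ell(x)$ is the minimal length of a product of elements of $X$ equal to $x$; $x\le y$ if there is $x'\in\mathrm{Mon}(X)$ with $xx'=y$ and $\ell(x)+\ell(x')=\ell(y)$; $[1,g]=\{x:x\le g\}$, a bounded graded poset of height $n=\ell(g)$. $O_g$ is the order complex of $[1,g]$ (an ordered $k$-simplex for each chain $x_0<\cdots<x_k$), with the orthoscheme metric: each maximal simplex (maximal chain $x_0<\cdots<x_n$) is the standard orthoscheme $\{0\le y_1\le\cdots\le y_n\le1\}\subset\mathbb R^n$ with $x_i$ at the vertex whose last $i$ coordinates are $1$ and the others $0$. A linear factorization of $g$ is $[x_L\ x_1\cdots x_k\ x_R]$ with entries in $\mathrm{Mon}(X)$, $x_1,\dots,x_k\ne1$, lengths summing to $\ell(g)$, product $g$. A weighted linear factorization of $g$ is a function $\mathbf u\colon[0,1]\to G$, trivial at all but finitely many points, such that with $0<s_1<\dots<s_k<1$ the points of $(0,1)$ where $\mathbf u$ is nontrivial, $P(\mathbf u)=[\mathbf u(0)\ \mathbf u(s_1)\cdots\mathbf u(s_k)\ \mathbf u(1)]$ is a linear factorization of $g$. $\mathrm{WFact}(G,g,\mathbf I)$ is the set of these with the following metric. For $G=\mathbb Z$, $X=\{1\}$, a weighted linear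 factorization $\mathbf s$ of $n$ (values are nonnegative integers summing to $n$) is identified with the point of the standard orthoscheme $\{0\le y_1\le\cdots\le y_n\le1\}$ obtained by listing, in nondecreasing order, each $r\in[0,1]$ repeated $\mathbf s(r)$ times. For general $G$, the map $L(\mathbf u)=\ell\circ\mathbf u$ sends each cell $\{\mathbf u:P(\mathbf u)=\mathbf x\}$ bijectively onto the open face $\{\mathbf s:P(\mathbf s)=L(\mathbf x)\}$ of this orthoscheme (where $L([x_L\cdots x_R])=[\ell(x_L)\cdots\ell(x_R)]$); pulling back the Euclidean metric on each cell and taking closures makes $\mathrm{WFact}(G,g,\mathbf I)$ a piecewise-Euclidean complex, with the induced length metric. *)

From Coquelicot Require Import Coquelicot.
From Stdlib Require Import Reals List Arith ClassicalEpsilon ClassicalDescription Sorting.Sorted.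
Import ListNotations.
Set Implicit Arguments.
Open Scope R_scope.

Record Group := MkGroup {
  gcar :> Type;
  gmul : gcar -> gcar -> gcar;
  gone : gcar;
  ginv : gcar -> gcar;
  gmulA : forall a b c, gmul a (gmul b c) = gmul (gmul a b) c;
  gmul1l : forall a, gmul gone a = a;
  gmul1r : forall a, gmul a gone = a;
  gmulVl : forall a, gmul (ginv a) a = gone;
  gmulVr : forall a, gmul a (ginv a) = gone }.

Section GroupDefs.
Variable G : Group.
Variable X : G -> Prop.

Definition gprod (l : list G) : G := fold_right (gmul G) (gone G) l.

Definition generates : Prop :=
  forall h : G, exists l : list (bool * G)%type,
    Forall (fun bx : (bool * G)%type => X (snd bx)) l /\
    h = gprod (map (fun bx : (bool * G)%type => if fst bx then snd bx else ginv G (snd bx)) l).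

Definition conj_closed : Prop :=
  forall x h : G, X x -> X (gmul G (gmul G h x) (ginv G h)).

Definition InMon (x : G) : Prop := exists l, Forall X l /\ gprod l = x.

Definition len_is_prod (x : G) (m : nat) : Prop :=
  exists l, Forall X l /\ length l = m /\ gprod l = x.

Definition is_min_len (x : G) (n : nat) : Prop :=
  len_is_prod x n /\ forall m, len_is_prod x m -> (n <= m)%nat.

(* ell(x): minimal length of a product of elements of X equal to x
   (meaningful for x in Mon(X); an unspecified value otherwise) *)
Definition ell (x : G) : nat := epsilon (inhabits 0%nat) (is_min_len x).

Definition gle (x y : G) : Prop :=
  InMon x /\ exists x', InMon x' /\ gmul G x x' = y /\ (ell x + ell x' = ell y)%nat.

Definition glt (x y : G) : Prop := gle x y /\ x <> y.

Variable g : G.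

Definition is_chain (c : list G) : Prop :=
  (forall i j, (i < j < length c)%nat -> glt (nth i c (gone G)) (nth j c (gone G))) /\
  Forall (fun x => gle x g) c.

Definition max_chain (c : list G) : Prop :=
  is_chain c /\ forall c', is_chain c' -> incl c c' -> incl c' c.

(* linear factorization [x_L x_1 ... x_k x_R] of g *)
Definition lin_fact (x : list G) : Prop :=
  (2 <= length x)%nat /\
  Forall InMon x /\
  (forall i, (1 <= i <= length x - 2)%nat -> nth i x (gone G) <> gone G) /\
  fold_right Nat.add 0%nat (map ell x) = ell g /\
  gprod x = g.

End GroupDefs.
Arguments gprod {G} l.
Arguments generates {G} X.
Arguments conj_closed {G} X.
Arguments InMon {G} X x.
Arguments len_is_prod {G} X x m.
Arguments is_min_len {G} X x n.
Arguments ell {G} X x.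
Arguments gle {G} X x y.
Arguments glt {G} X x y.
Arguments is_chain {G} X g c.
Arguments max_chain {G} X g c.
Arguments lin_fact {G} X g x.

(* Vectors of R^m are functions nat -> R, using coordinates 1..m.      *)
Fixpoint rsum (f : nat -> R) (m : nat) : R :=
  match m with O => 0 | S m' => rsum f m' + f m end.

Definition eucl (m : nat) (a b : nat -> R) : R :=
  sqrt (rsum (fun j => (a j - b j) ^ 2) m).

Definition orthoscheme (m : nat) (y : nat -> R) : Prop :=
  (forall j, (1 <= j <= m)%nat -> 0 <= y j <= 1) /\
  (forall j, (1 <= j < m)%nat -> y j <= y (S j)).

(* A closed cell c is the image of  chart c : dom c -> P ; its metric is
   the Euclidean metric of R^(amb c) pulled back along emb c.           *)
Record pecomplex (P : Type) := PEC {
  pts : P -> Prop;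
  cell : Type;
  is_cell : cell -> Prop;
  amb : cell -> nat;
  dom : cell -> (nat -> R) -> Prop;
  chart : cell -> (nat -> R) -> P;
  emb : cell -> (nat -> R) -> (nat -> R) }.

Definition cell_step P (K : pecomplex P) (p q : P) (d : R) : Prop :=
  exists c a b, is_cell K c /\ dom K c a /\ dom K c b /\
    chart K c a = p /\ chart K c b = q /\
    d = eucl (amb K c) (emb K c a) (emb K c b).

Inductive string_len P (K : pecomplex P) : P -> P -> R -> Prop :=
| sl_nil : forall p, pts K p -> string_len K p p 0
| sl_cons : forall p q r d e, pts K p -> cell_step K p q d ->
    string_len K q r e -> string_len K p r (d + e).

Definition pe_dist P (K : pecomplex P) (p q : P) : Rbar :=
  Glb_Rbar (string_len K p q).

Definition isometric P Q (K : pecomplex P) (L : pecomplex Q) : Prop :=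
  exists f : P -> Q,
    (forall p, pts K p -> pts L (f p)) /\
    (forall p p', pts K p -> pts K p' -> f p = f p' -> p = p') /\
    (forall q, pts L q -> exists p, pts K p /\ f p = q) /\
    (forall p p', pts K p -> pts K p' -> pe_dist L (f p) (f p') = pe_dist K p p').

(* Points: barycentric coordinates, i.e. functions [1,g] -> [0,1]
   (represented as G -> R) supported on a chain.                        *)
Section OrderComplex.
Variables (G : Group) (X : G -> Prop) (g : G).

(* maximal simplex of the chain c = x_0 < ... < x_k (k = length c - 1),
   identified with the standard orthoscheme in R^k, with x_i at the
   vertex whose last i coordinates are 1: the barycentric weight of x_i
   at y is  Y(k-i+1) - Y(k-i)  with Y 0 = 0, Y (k+1) = 1, Y j = y j.    *)
Definition oc_chart (c : list G) (y : nat -> R) : G -> R :=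
  let k := (length c - 1)%nat in
  let Y j := if Nat.eqb j 0 then 0 else if Nat.eqb j (S k) then 1 else y j in
  fun z => fold_right Rplus 0
    (map (fun i => if excluded_middle_informative (z = nth i c (gone G))
                   then Y (S k - i)%nat - Y (k - i)%nat else 0)
         (seq 0 (length c))).

Definition Og_complex : pecomplex (G -> R) := {|
  pts := fun p => exists c y, max_chain X g c /\
            orthoscheme (length c - 1) y /\ oc_chart c y = p;
  cell := list G;
  is_cell := max_chain X g;
  amb := fun c => (length c - 1)%nat;
  dom := fun c => orthoscheme (length c - 1);
  chart := oc_chart;
  emb := fun _ y => y |}.
End OrderComplex.
Arguments oc_chart {G} c y.
Arguments Og_complex {G} X g.

(* A function u : [0,1] -> G is represented by u : R -> G with u r = 1
   outside [0,1].                                                       *)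
Section WFact.
Variables (G : Group) (X : G -> Prop) (g : G).

Definition is_wfact (u : R -> G) : Prop :=
  (forall r, ~ (0 <= r <= 1) -> u r = gone G) /\
  exists s : list R,
    StronglySorted Rlt s /\ Forall (fun r => 0 < r < 1) s /\
    (forall r, 0 < r < 1 -> (u r <> gone G <-> In r s)) /\
    lin_fact X g (u 0 :: map u s ++ [u 1]).

Definition wpos (x : list G) (s : nat -> R) (i : nat) : R :=
  if Nat.eqb i 0 then 0 else if Nat.eqb i (length x - 1) then 1 else s i.

Definition wf_chart (x : list G) (s : nat -> R) : R -> G :=
  fun r => fold_right
    (fun i acc => if Req_EM_T (wpos x s i) r then gmul G (nth i x (gone G)) acc else acc)
    (gone G) (seq 0 (length x)).

(* the corresponding point of the standard orthoscheme in R^n (n = ell g):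
   each position repeated ell(entry) times, in nondecreasing order *)
Definition wf_emb (x : list G) (s : nat -> R) : nat -> R :=
  let l := flat_map (fun i => repeat (wpos x s i) (ell X (nth i x (gone G))))
                    (seq 0 (length x)) in
  fun j => nth (j - 1) l 0.

Definition WFact_complex : pecomplex (R -> G) := {|
  pts := is_wfact;
  cell := list G;
  is_cell := lin_fact X g;
  amb := fun _ => ell X g;
  dom := fun x => orthoscheme (length x - 2);
  chart := wf_chart;
  emb := wf_emb |}.
End WFact.
Arguments is_wfact {G} X g u.
Arguments wpos {G} x s i.
Arguments wf_chart {G} x s.
Arguments wf_emb {G} X x s.
Arguments WFact_complex {G} X g.

(* Both spaces are parametrised by placed factorizations: a minimal factorization
   g = e_1 ... e_n (n = ell g) into letters of X, the letters carrying positions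
   0 <= y_1 <= ... <= y_n <= 1.  On the order-complex side this is the point y of the
   orthoscheme of the maximal chain of suffix products e_(n-i+1) ... e_n; on the other side it
   is the weighted factorization r |-> (product of the letters placed at r).  Closure of X
   under conjugation makes x <= y equivalent to y = z x with ell z + ell x = ell y, so every
   maximal chain of [1,g] is such a chain of suffix products; every cell of WFact refines into
   a cell of placed letters.  Two placed factorizations give the same point on either side iff
   their positions agree and their suffix products agree at every gap y_k < y_(k+1) (with
   y_0 = 0, y_(n+1) = 1).  The resulting bijection carries cells onto cells with the same
   Euclidean coordinates, in both directions, so it preserves the lengths of strings and hence
   the induced length metrics. *)

From Pilot Require Import Defs.
From Coquelicot Require Import Coquelicot.
From Stdlib Require Import Reals Lra List Arith Lia ClassicalEpsilon ClassicalDescription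
  Sorting.Sorted FunctionalExtensionality PropExtensionality.
Import ListNotations.
Set Implicit Arguments.
Unset Strict Implicit.
Set Bullet Behavior "Strict Subproofs".

Section GroupLemmas.
Variable G : Group.
Local Notation "x ** y" := (gmul G x y) (at level 40, left associativity).
Local Notation inv := (ginv G).

Lemma ginv_inv (a : G) : inv (inv a) = a.
Proof.
  rewrite <- (gmul1r G (inv (inv a))), <- (gmulVl G a), gmulA, gmulVl, gmul1l; auto.
Qed.

Lemma gmul_cancel_r (a b c : G) : b ** a = c ** a -> b = c.
Proof.
  intro H. rewrite <- (gmul1r G b), <- (gmul1r G c), <- (gmulVr G a), !gmulA, H; auto.
Qed.

Lemma gprod_app (l1 l2 : list G) : gprod (l1 ++ l2) = gprod l1 ** gprod l2.
Proof. induction l1; simpl. - rewrite gmul1l; auto. - rewrite IHl1, gmulA; auto. Qed.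

Lemma gprod_concat (ls : list (list G)) : gprod (concat ls) = gprod (map gprod ls).
Proof. induction ls; simpl; auto. rewrite gprod_app, IHls; auto. Qed.

Definition conjg (h x : G) : G := h ** x ** inv h.

Lemma conjg_mul (h x y : G) : conjg h (x ** y) = conjg h x ** conjg h y.
Proof.
  unfold conjg. rewrite !gmulA. f_equal.
  rewrite <- (gmulA G (h ** x) (inv h) h), gmulVl, gmul1r; auto.
Qed.

Lemma conjg_gprod (h : G) (l : list G) : gprod (map (conjg h) l) = conjg h (gprod l).
Proof.
  induction l; simpl.
  - unfold conjg. rewrite gmul1r, gmulVr; auto.
  - rewrite IHl, conjg_mul; auto.
Qed.

Lemma conjgK (h x : G) : conjg (inv h) (conjg h x) = x.
Proof.
  unfold conjg. rewrite ginv_inv, !gmulA, gmulVl, gmul1l, <- gmulA, gmulVl, gmul1r; auto.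
Qed.

End GroupLemmas.

Section Length.
Variables (G : Group) (X : G -> Prop).
Local Notation "x ** y" := (gmul G x y) (at level 40, left associativity).
Local Notation "1g" := (gone G).
Local Notation inv := (ginv G).
Local Notation ell := (ell X).

Lemma ell_spec (x : G) : InMon X x -> is_min_len X x (ell x).
Proof.
  intros [l [Hl Hp]]. unfold Defs.ell. apply epsilon_spec.
  destruct (dec_inh_nat_subset_has_unique_least_element (len_is_prod X x)) as [n [[Hn Hmin] _]].
  - intro m; apply classic.
  - exists (length l), l; auto.
  - exists n; split; auto.
Qed.

Definition min_fact (y : G) (w : list G) : Prop := Forall X w /\ gprod w = y /\ length w = ell y.

Lemma ell_witness (x : G) : InMon X x -> exists w, min_fact x w.
Proof. intro H. destruct (ell_spec H) as [[w Hw] _]. exists w. unfold min_fact. tauto. Qed.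

Lemma ell_gprod_le (w : list G) : Forall X w -> (ell (gprod w) <= length w)%nat.
Proof.
  intro H. assert (HM : InMon X (gprod w)) by (exists w; auto).
  apply (proj2 (ell_spec HM)). exists w; auto.
Qed.

Lemma InMon_gprod (w : list G) : Forall X w -> InMon X (gprod w).
Proof. intro H; exists w; auto. Qed.

Lemma InMon_one : InMon X 1g.
Proof. exists []; simpl; auto. Qed.

Lemma InMon_letter (t : G) : X t -> InMon X t.
Proof. intro H. exists [t]. simpl. rewrite gmul1r; auto. Qed.

Lemma InMon_mul (x y : G) : InMon X x -> InMon X y -> InMon X (x ** y).
Proof.
  intros [l1 [H1 <-]] [l2 [H2 <-]]. exists (l1 ++ l2).
  split; [apply Forall_app; auto | apply gprod_app].
Qed.

Lemma ell_one : ell 1g = 0%nat.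
Proof. pose proof (@ell_gprod_le [] (Forall_nil _)) as H. simpl in H. lia. Qed.

Lemma ell_eq0 (x : G) : InMon X x -> ell x = 0%nat -> x = 1g.
Proof.
  intros H H0. destruct (ell_witness H) as [[|a w] [_ [<- Hl]]]; auto.
  rewrite H0 in Hl; discriminate.
Qed.

Lemma ell_mul_le (x y : G) : InMon X x -> InMon X y -> (ell (x ** y) <= ell x + ell y)%nat.
Proof.
  intros Hx Hy. destruct (ell_witness Hx) as [l1 [A1 [<- <-]]].
  destruct (ell_witness Hy) as [l2 [A2 [<- <-]]].
  rewrite <- gprod_app, <- length_app. apply ell_gprod_le, Forall_app; auto.
Qed.

Definition reduced (w : list G) : Prop := Forall X w /\ ell (gprod w) = length w.

Lemma min_fact_reduced (y : G) (w : list G) : min_fact y w -> reduced w.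
Proof. intros [A [<- C]]. split; auto. Qed.

Lemma reduced_app (w1 w2 : list G) : reduced (w1 ++ w2) -> reduced w1 /\ reduced w2.
Proof.
  intros [HF He]. apply Forall_app in HF as [F1 F2].
  pose proof (ell_gprod_le F1) as L1. pose proof (ell_gprod_le F2) as L2.
  pose proof (ell_mul_le (InMon_gprod F1) (InMon_gprod F2)) as L12.
  rewrite <- gprod_app, He, length_app in L12.
  split; split; auto; lia.
Qed.

Lemma reduced_firstn (w : list G) k : reduced w -> reduced (firstn k w).
Proof. intro H. rewrite <- (firstn_skipn k w) in H. apply reduced_app in H; tauto. Qed.

Lemma reduced_skipn (w : list G) k : reduced w -> reduced (skipn k w).
Proof. intro H. rewrite <- (firstn_skipn k w) in H. apply reduced_app in H; tauto. Qed.

Lemma ell_reduced_letter (w : list G) t : reduced w -> In t w -> ell t = 1%nat.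
Proof.
  intros H Ht. apply in_split in Ht as [w1 [w2 ->]].
  apply reduced_app in H as [_ H]. apply (reduced_firstn 1) in H as [_ H].
  simpl in H. rewrite gmul1r in H. auto.
Qed.

Lemma reduced_letter_neq1 (w : list G) t : reduced w -> In t w -> t <> 1g.
Proof. intros H Ht ->. pose proof (ell_reduced_letter H Ht) as E. rewrite ell_one in E. lia. Qed.

Lemma sum_ell_reduced (w : list G) : reduced w -> fold_right Nat.add 0%nat (map ell w) = length w.
Proof.
  intro H. assert (Hat : forall t, In t w -> ell t = 1%nat)
    by (intros t Ht; exact (ell_reduced_letter H Ht)).
  clear H. induction w as [|t w IH]; simpl; auto.
  rewrite (Hat t) by (simpl; auto). rewrite IH by (intros; apply Hat; simpl; auto). auto.
Qed.

Lemma gle_ell (x y : G) : gle X x y -> (ell x <= ell y)%nat.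
Proof. intros [_ [x' [_ [_ L]]]]. lia. Qed.

Lemma glt_ell (x y : G) : glt X x y -> (ell x < ell y)%nat.
Proof.
  intros [[Hx [x' [Hx' [E L]]]] N].
  destruct (ell x') eqn:Ex; [|lia].
  exfalso. apply N. rewrite <- E, (ell_eq0 Hx' Ex), gmul1r; auto.
Qed.

Hypothesis Hcc : conj_closed X.

Lemma InMon_conjg (h x : G) : InMon X x -> InMon X (conjg h x).
Proof.
  intros [l [A <-]]. rewrite <- conjg_gprod. apply InMon_gprod, Forall_map.
  eapply Forall_impl; [|exact A]. intros; apply Hcc; auto.
Qed.

Lemma ell_conjg_le (h x : G) : InMon X x -> (ell (conjg h x) <= ell x)%nat.
Proof.
  intro H. destruct (ell_witness H) as [l [A [<- <-]]].
  rewrite <- conjg_gprod, <- (length_map (conjg h)). apply ell_gprod_le, Forall_map.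
  eapply Forall_impl; [|exact A]. intros; apply Hcc; auto.
Qed.

Lemma ell_conjg (h x : G) : InMon X x -> ell (conjg h x) = ell x.
Proof.
  intro H. apply Nat.le_antisymm; [apply ell_conjg_le; auto|].
  rewrite <- (conjgK h x) at 1. apply ell_conjg_le, InMon_conjg; auto.
Qed.

(* Conjugation turns the left factor [x'] of [x x' = y] into a right one. *)
Lemma gle_left_factor (x y : G) : gle X x y <->
  InMon X x /\ exists z, InMon X z /\ z ** x = y /\ (ell z + ell x = ell y)%nat.
Proof.
  split.
  - intros [Hx [x' [Hx' [E L]]]]. split; auto.
    exists (conjg x x'). split; [|split].
    + apply InMon_conjg; auto.
    + rewrite <- E. unfold conjg. rewrite <- !gmulA, gmulVl, gmul1r; auto.
    + rewrite ell_conjg; auto; lia.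
  - intros [Hx [z [Hz [E L]]]]. split; auto.
    exists (conjg (inv x) z). split; [|split].
    + apply InMon_conjg; auto.
    + rewrite <- E. unfold conjg. rewrite ginv_inv, !gmulA, gmulVr, gmul1l; auto.
    + rewrite ell_conjg; auto; lia.
Qed.

End Length.

Lemma strict_mono_bounded_id (h : nat -> nat) n :
  (forall i j, (i < j <= n)%nat -> (h i < h j)%nat) -> (forall i, (i <= n)%nat -> (h i <= n)%nat) ->
  forall i, (i <= n)%nat -> h i = i.
Proof.
  intros Hmono Hbnd.
  assert (Hgrow : forall i j, (i + j <= n)%nat -> (h i + j <= h (i + j))%nat).
  { intros i j. induction j; intro Hij.
    - rewrite !Nat.add_0_r; lia.
    - specialize (Hmono (i + j)%nat (i + S j)%nat ltac:(lia)). specialize (IHj ltac:(lia)). lia. }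
  intros i Hi. pose proof (Hgrow 0%nat i ltac:(lia)) as Hlow. simpl in Hlow.
  pose proof (Hgrow i (n - i)%nat ltac:(lia)) as Hup. replace (i + (n - i))%nat with n in Hup by lia.
  pose proof (Hbnd n (le_n n)). lia.
Qed.

Lemma skipn_as_app {A : Type} (e : list A) k k' : (k' <= k)%nat ->
  skipn k' e = firstn (k - k') (skipn k' e) ++ skipn k e.
Proof.
  intro H. rewrite <- (firstn_skipn (k - k') (skipn k' e)) at 1. f_equal.
  rewrite skipn_skipn. f_equal. lia.
Qed.

Section Chains.
Variables (G : Group) (X : G -> Prop).
Hypothesis Hcc : conj_closed X.
Local Notation "1g" := (gone G).
Local Notation ell := (ell X).

(* Suffix rather than prefix products: in [oc_chart] the vertex of [x_i] has its last [i]
   coordinates equal to 1, so [x_i] collects the [i] letters placed last. *)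
Definition suffix_chain (e : list G) : list G :=
  map (fun i => gprod (skipn (length e - i) e)) (seq 0 (S (length e))).

Lemma length_suffix_chain (e : list G) : length (suffix_chain e) = S (length e).
Proof. unfold suffix_chain. rewrite length_map, length_seq; auto. Qed.

Lemma nth_suffix_chain (e : list G) i d : (i <= length e)%nat ->
  nth i (suffix_chain e) d = gprod (skipn (length e - i) e).
Proof.
  intro H. unfold suffix_chain. set (f := fun i => gprod (skipn (length e - i) e)).
  rewrite nth_indep with (d' := f 0%nat) by (rewrite length_map, length_seq; lia).
  rewrite map_nth, seq_nth by lia. auto.
Qed.

Lemma In_suffix_chain (e : list G) z :
  In z (suffix_chain e) <-> exists k, (k <= length e)%nat /\ z = gprod (skipn k e).
Proof.
  unfold suffix_chain. rewrite in_map_iff. split.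
  - intros [i [<- Hi]]. apply in_seq in Hi. exists (length e - i)%nat. split; auto; lia.
  - intros [k [Hk ->]]. exists (length e - k)%nat. split.
    + f_equal. f_equal. lia.
    + apply in_seq. lia.
Qed.

Lemma ell_skipn (e : list G) k : reduced X e -> ell (gprod (skipn k e)) = (length e - k)%nat.
Proof. intro H. rewrite (proj2 (reduced_skipn k H)), length_skipn; auto. Qed.

Lemma gle_skipn (e : list G) k k' : reduced X e -> (k' <= k)%nat ->
  gle X (gprod (skipn k e)) (gprod (skipn k' e)).
Proof.
  intros He Hk. pose proof (reduced_firstn (k - k') (reduced_skipn k' He)) as Hmid.
  apply gle_left_factor; auto. split.
  - apply InMon_gprod, (reduced_skipn k He).
  - exists (gprod (firstn (k - k') (skipn k' e))). split; [|split].
    + apply InMon_gprod, Hmid.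
    + rewrite <- gprod_app, <- skipn_as_app; auto.
    + rewrite (proj2 Hmid), !ell_skipn, length_firstn, length_skipn; auto. lia.
Qed.

Lemma suffix_chain_is_chain (g : G) (e : list G) : min_fact X g e -> is_chain X g (suffix_chain e).
Proof.
  intro Hg. pose proof (min_fact_reduced Hg) as He. split.
  - intros i j Hij. rewrite length_suffix_chain in Hij. rewrite !nth_suffix_chain by lia. split.
    + apply gle_skipn; auto; lia.
    + intro E. apply (f_equal ell) in E. rewrite !ell_skipn in E; auto. lia.
  - apply Forall_forall. intros z Hz. apply In_suffix_chain in Hz as [k [Hk ->]].
    destruct Hg as [_ [<- _]]. apply (gle_skipn (k' := 0)); auto; lia.
Qed.

Lemma chain_comparable (y : G) (c : list G) x z : is_chain X y c -> In x c -> In z c ->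
  x = z \/ glt X x z \/ glt X z x.
Proof.
  intros [Hc _] Hx Hz. apply (In_nth _ _ 1g) in Hx as [i [Hi <-]].
  apply (In_nth _ _ 1g) in Hz as [j [Hj <-]].
  destruct (lt_eq_lt_dec i j) as [[L|L]|L].
  - right; left; apply Hc; lia.
  - left; subst; auto.
  - right; right; apply Hc; lia.
Qed.

Lemma suffix_chain_max (g : G) (e : list G) : min_fact X g e -> max_chain X g (suffix_chain e).
Proof.
  intro Hg. pose proof (min_fact_reduced Hg) as He. split; [apply suffix_chain_is_chain; auto|].
  intros c Hc Hinc z Hz.
  assert (Lz : (ell z <= length e)%nat).
  { destruct Hc as [_ HF]. rewrite Forall_forall in HF. destruct Hg as [_ [_ ->]].
    apply gle_ell, HF; auto. }
  set (v := gprod (skipn (length e - ell z) e)).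
  assert (Hv : In v (suffix_chain e))
    by (apply In_suffix_chain; exists (length e - ell z)%nat; split; auto; lia).
  assert (Ev : ell v = ell z) by (unfold v; rewrite ell_skipn; auto; lia).
  destruct (chain_comparable Hc Hz (Hinc v Hv)) as [E|[E|E]].
  - rewrite E; auto.
  - apply glt_ell in E. lia.
  - apply glt_ell in E. lia.
Qed.

Lemma is_chain_snoc (y x : G) (c : list G) : is_chain X y (c ++ [x]) -> is_chain X x c /\ gle X x y.
Proof.
  intros [Hc HF]. rewrite length_app in Hc. simpl in Hc. split; [split|].
  - intros i j Hij. specialize (Hc i j). rewrite !app_nth1 in Hc by lia. apply Hc. lia.
  - apply Forall_forall. intros z Hz. apply (In_nth _ _ 1g) in Hz as [i [Hi <-]].
    specialize (Hc i (length c)). rewrite app_nth1, app_nth2, Nat.sub_diag in Hc by lia.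
    apply Hc. lia.
  - apply Forall_app in HF as [_ HF]. inversion HF; auto.
Qed.

Lemma chain_in_suffix_chain (c : list G) : forall y, is_chain X y c -> InMon X y ->
  exists e, min_fact X y e /\ incl c (suffix_chain e).
Proof.
  induction c as [|x c IH] using rev_ind; intros y Hc Hy.
  - destruct (ell_witness Hy) as [e He]. exists e. split; [auto|intros z []].
  - destruct (is_chain_snoc Hc) as [Hc' Hxy]. apply gle_left_factor in Hxy as [Hx [z [Hz [E L]]]]; auto.
    destruct (IH x Hc' Hx) as [f [[Af [Bf Cf]] Hinc]].
    destruct (ell_witness Hz) as [w [Aw [Cw Bw]]].
    exists (w ++ f). split; [split; [|split]|].
    + apply Forall_app; auto.
    + rewrite gprod_app, Cw, Bf; auto.
    + rewrite length_app; lia.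
    + assert (Hsk : forall k, skipn (length w + k) (w ++ f) = skipn k f).
      { intro k. rewrite skipn_app, skipn_all2 by lia. simpl. f_equal. lia. }
      intros v Hv. apply In_suffix_chain. apply in_app_or in Hv as [Hv|[<-|[]]].
      * apply Hinc, In_suffix_chain in Hv as [k [Hk ->]].
        exists (length w + k)%nat. rewrite Hsk, length_app. split; auto; lia.
      * exists (length w). rewrite <- (Nat.add_0_r (length w)) at 2. rewrite Hsk, length_app.
        split; auto; lia.
Qed.

Lemma is_chain_NoDup (y : G) (c : list G) : is_chain X y c -> NoDup c.
Proof.
  intros [Hc _]. apply (NoDup_nth c 1g). intros i j Hi Hj E.
  destruct (lt_eq_lt_dec i j) as [[L|L]|L]; auto; exfalso.
  - apply (Hc i j); auto.
  - apply (Hc j i); auto.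
Qed.

Lemma max_chain_suffix_chain (g : G) (c : list G) : InMon X g -> max_chain X g c ->
  exists e, min_fact X g e /\ c = suffix_chain e.
Proof.
  intros Hg [Hc Hmax].
  destruct (chain_in_suffix_chain Hc Hg) as [e [He Hinc]]. exists e. split; auto.
  pose proof (min_fact_reduced He) as Hred.
  pose proof (Hmax _ (suffix_chain_is_chain He) Hinc) as Hinc'.
  pose proof (NoDup_incl_length (is_chain_NoDup Hc) Hinc).
  pose proof (NoDup_incl_length (is_chain_NoDup (suffix_chain_is_chain He)) Hinc').
  rewrite length_suffix_chain in *.
  assert (Hrank : forall i, (i <= length e)%nat -> ell (nth i c 1g) = i).
  { apply (strict_mono_bounded_id (h := fun i => ell (nth i c 1g))).
    - intros i j Hij. apply glt_ell, (proj1 Hc). lia.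
    - intros i Hi. destruct Hc as [_ HF]. rewrite Forall_forall in HF.
      destruct He as [_ [_ ->]]. apply gle_ell, HF, nth_In. lia. }
  apply nth_ext with 1g 1g; [rewrite length_suffix_chain; lia|].
  intros i Hi. rewrite nth_suffix_chain by lia.
  assert (Hin : In (nth i c 1g) (suffix_chain e)) by (apply Hinc, nth_In; auto).
  apply In_suffix_chain in Hin as [k [Hk Ek]].
  specialize (Hrank i ltac:(lia)). rewrite Ek, ell_skipn in Hrank; auto.
  rewrite Ek. f_equal. f_equal. lia.
Qed.

End Chains.

Open Scope R_scope.

Definition in01 (r : R) : Prop := 0 <= r <= 1.

Definition coords (A : list R) : nat -> R := fun j => nth (j - 1) A 0.

Lemma StronglySorted_nth_le (A : list R) i j : StronglySorted Rle A -> (i <= j < length A)%nat ->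
  nth i A 0 <= nth j A 0.
Proof.
  revert i j. induction A as [|a A IH]; intros i j H Hij; simpl in *; [lia|].
  apply StronglySorted_inv in H as [H1 H2]. destruct i, j.
  - lra.
  - rewrite Forall_forall in H2. apply H2, nth_In. lia.
  - lia.
  - apply IH; auto; lia.
Qed.

Lemma StronglySorted_app_r {A : Type} (Rel : A -> A -> Prop) (l1 l2 : list A) :
  StronglySorted Rel (l1 ++ l2) -> StronglySorted Rel l2.
Proof. induction l1; simpl; auto. intro H. apply StronglySorted_inv in H as [H _]; auto. Qed.

Lemma StronglySorted_snoc {A : Type} (Rel : A -> A -> Prop) (l : list A) b :
  StronglySorted Rel l -> Forall (fun a => Rel a b) l -> StronglySorted Rel (l ++ [b]).
Proof.
  induction l as [|a l IH]; intros H1 H2; simpl; [repeat constructor|].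
  apply StronglySorted_inv in H1 as [H1 H3]. apply Forall_cons_iff in H2 as [Hab H2].
  constructor; [apply IH; auto|]. apply Forall_app; auto.
Qed.

Lemma StronglySorted_lt_le (A : list R) : StronglySorted Rlt A -> StronglySorted Rle A.
Proof.
  induction A; intro H; constructor; apply StronglySorted_inv in H as [H1 H2]; auto.
  eapply Forall_impl; [|exact H2]. intros; simpl in *; lra.
Qed.

Lemma StronglySorted_lt_NoDup (A : list R) : StronglySorted Rlt A -> NoDup A.
Proof.
  induction A; intro H; constructor; apply StronglySorted_inv in H as [H1 H2]; auto.
  intro Hin. rewrite Forall_forall in H2. specialize (H2 a Hin). lra.
Qed.

Lemma Sorted_of_nth_le (A : list R) :
  (forall i, (S i < length A)%nat -> nth i A 0 <= nth (S i) A 0) -> Sorted Rle A.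
Proof.
  induction A as [|a A IH]; intro H; constructor.
  - apply IH. intros i Hi. apply (H (S i)). simpl; lia.
  - destruct A as [|b A]; constructor. apply (H 0%nat). simpl; lia.
Qed.

Lemma orthoscheme_coords (A : list R) :
  orthoscheme (length A) (coords A) <-> StronglySorted Rle A /\ Forall in01 A.
Proof.
  unfold coords. split.
  - intros [H1 H2]. split.
    + apply Sorted_StronglySorted; [intros a b c; lra|]. apply Sorted_of_nth_le.
      intros i Hi. specialize (H2 (S i) ltac:(lia)).
      replace (S i - 1)%nat with i in H2 by lia.
      replace (S (S i) - 1)%nat with (S i) in H2 by lia. exact H2.
    + apply Forall_forall. intros x Hx. apply (In_nth _ _ 0) in Hx as [i [Hi <-]].
      specialize (H1 (S i) ltac:(lia)). simpl in H1. rewrite Nat.sub_0_r in H1. exact H1.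
  - intros [H1 H2]. split.
    + intros j Hj. rewrite Forall_forall in H2. apply H2, nth_In. lia.
    + intros j Hj. simpl. rewrite Nat.sub_0_r. apply StronglySorted_nth_le; auto; lia.
Qed.

Lemma coords_map_seq (y : nat -> R) n j : (1 <= j <= n)%nat -> coords (map y (seq 1 n)) j = y j.
Proof.
  intro H. unfold coords. rewrite nth_indep with (d' := y 0%nat) by (rewrite length_map, length_seq; lia).
  rewrite map_nth, seq_nth by lia. f_equal. lia.
Qed.

Lemma map_coords_seq (A : list R) : map (coords A) (seq 1 (length A)) = A.
Proof.
  apply nth_ext with 0 0; rewrite length_map, length_seq; auto.
  intros i Hi. rewrite nth_indep with (d' := coords A 0%nat) by (rewrite length_map, length_seq; auto).
  rewrite map_nth, seq_nth by auto. unfold coords. f_equal. lia.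
Qed.

Lemma sorted_eq_of_count (A B : list R) : StronglySorted Rle A -> StronglySorted Rle B ->
  (forall r, count_occ Req_EM_T A r = count_occ Req_EM_T B r) -> A = B.
Proof.
  revert B. induction A as [|a A IH]; intros [|b B] HA HB Hc.
  - auto.
  - specialize (Hc b). rewrite count_occ_cons_eq in Hc; auto. simpl in Hc. lia.
  - specialize (Hc a). rewrite count_occ_cons_eq in Hc; auto. simpl in Hc. lia.
  - assert (Ha : In a (b :: B))
      by (apply (count_occ_In Req_EM_T); rewrite <- Hc, count_occ_cons_eq; auto; lia).
    assert (Hb : In b (a :: A))
      by (apply (count_occ_In Req_EM_T); rewrite Hc, count_occ_cons_eq; auto; lia).
    apply StronglySorted_inv in HA as [HA1 HA2]. apply StronglySorted_inv in HB as [HB1 HB2].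
    rewrite Forall_forall in HA2, HB2.
    assert (a = b).
    { destruct Ha as [Ha|Ha]; auto. destruct Hb as [Hb|Hb]; auto.
      specialize (HA2 b Hb). specialize (HB2 a Ha). lra. }
    subst b. f_equal. apply IH; auto. intro r. specialize (Hc r). simpl in Hc.
    destruct (Req_EM_T a r); lia.
Qed.

Lemma sorted_split (A : list R) r : StronglySorted Rle A -> exists A1 A2 A3,
  A = A1 ++ A2 ++ A3 /\ Forall (fun a => a < r) A1 /\ Forall (eq r) A2 /\ Forall (fun a => r < a) A3.
Proof.
  induction A as [|a A IH]; intro H.
  - exists [], [], []. repeat constructor.
  - apply StronglySorted_inv in H as [H1 H2].
    destruct (IH H1) as [A1 [A2 [A3 [-> [P1 [P2 P3]]]]]].
    destruct (Rlt_le_dec a r) as [Lt|Ge]; [exists (a :: A1), A2, A3; auto|].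
    assert (HA1 : A1 = []).
    { destruct A1 as [|b A1]; auto. apply Forall_cons_iff in P1 as [Pb _].
      apply Forall_cons_iff in H2 as [Hb _]. lra. }
    subst A1. destruct (Req_EM_T a r) as [->|Ne].
    + exists [], (r :: A2), A3. auto.
    + exists [], [], (a :: A2 ++ A3). repeat split; auto. constructor; [lra|].
      apply Forall_app. split.
      * apply Forall_forall. intros b Hb. rewrite Forall_forall in P2, H2.
        pose proof (P2 b Hb). pose proof (H2 b (in_or_app _ _ _ (or_introl Hb))). lra.
      * exact P3.
Qed.

Lemma sorted_insert (s : list R) a : StronglySorted Rlt s ->
  exists s', StronglySorted Rlt s' /\ forall r, In r s' <-> a = r \/ In r s.
Proof.
  induction s as [|b s IH]; intro H.
  - exists [a]. split; [repeat constructor|]. simpl; tauto.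
  - apply StronglySorted_inv in H as [H1 H2].
    destruct (Rtotal_order a b) as [Lt|[Eq|Gt]].
    + exists (a :: b :: s). split; [|simpl; tauto].
      constructor; [constructor; auto|]. constructor; auto.
      eapply Forall_impl; [|exact H2]. simpl; intros; lra.
    + subst b. exists (a :: s). split; [constructor; auto|simpl; tauto].
    + destruct (IH H1) as [s' [S' Hs']]. exists (b :: s'). split.
      * constructor; auto. apply Forall_forall. intros x Hx. apply Hs' in Hx as [<-|Hx]; auto.
        rewrite Forall_forall in H2; auto.
      * intro r. simpl. rewrite Hs'. tauto.
Qed.

Lemma sorted_enum (A : list R) (P : R -> Prop) :
  exists s, StronglySorted Rlt s /\ forall r, In r s <-> In r A /\ P r.
Proof.
  induction A as [|a A [s [Ss Hs]]].
  - exists []. split; [constructor|simpl; tauto].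
  - destruct (classic (P a)) as [Pa|Pa].
    + destruct (sorted_insert a Ss) as [s' [S' Hs']]. exists s'. split; auto.
      intro r. rewrite Hs', Hs. simpl. split; [intros [<-|H]; tauto|intros [[<-|H] Pr]; tauto].
    + exists s. split; auto. intro r. rewrite Hs. simpl. split; [tauto|].
      intros [[<-|H] Pr]; tauto.
Qed.

Section PlacedWords.
Variables (G : Group) (X : G -> Prop).
Local Notation "x ** y" := (gmul G x y) (at level 40, left associativity).
Local Notation "1g" := (gone G).
Local Notation ell := (ell X).

Definition wf_point (L : list (R * G)) (r : R) : G :=
  fold_right (fun p acc => if Req_EM_T (fst p) r then snd p ** acc else acc) 1g L.

Lemma wf_point_app (L1 L2 : list (R * G)) r : wf_point (L1 ++ L2) r = wf_point L1 r ** wf_point L2 r.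
Proof.
  induction L1 as [|[a b] L1 IH]; simpl; [rewrite gmul1l; auto|].
  destruct (Req_EM_T a r); auto. rewrite IH, gmulA; auto.
Qed.

Lemma wf_point_notin (L : list (R * G)) r : ~ In r (map fst L) -> wf_point L r = 1g.
Proof.
  induction L as [|[a b] L IH]; simpl; auto. intro H.
  destruct (Req_EM_T a r); [exfalso; auto|]. apply IH; auto.
Qed.

Lemma wf_point_const (L : list (R * G)) r :
  Forall (eq r) (map fst L) -> wf_point L r = gprod (map snd L).
Proof.
  induction L as [|[a b] L IH]; simpl; auto. intro H. apply Forall_cons_iff in H as [<- H].
  destruct (Req_EM_T r r); [|congruence]. rewrite IH; auto.
Qed.

Lemma wf_point_graph (f : R -> G) (P : list R) r : NoDup P -> In r P ->
  wf_point (map (fun a => (a, f a)) P) r = f r.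
Proof.
  induction P as [|a P IH]; simpl; [tauto|]. intros ND [<-|Hin]; inversion ND as [|? ? Ha HP]; subst.
  - destruct (Req_EM_T a a); [|congruence]. rewrite wf_point_notin, gmul1r; auto.
    rewrite map_map. simpl. rewrite map_id. auto.
  - destruct (Req_EM_T a r); [subst; contradiction|]. auto.
Qed.

Lemma InMon_wf_point (L : list (R * G)) r : Forall X (map snd L) -> InMon X (wf_point L r).
Proof.
  induction L as [|[a b] L IH]; simpl; intro H; [apply InMon_one|].
  apply Forall_cons_iff in H as [Hb H]. destruct (Req_EM_T a r); auto.
  apply InMon_mul, IH; auto. apply InMon_letter; auto.
Qed.

Lemma wf_point_split (L1 L2 L3 : list (R * G)) r :
  Forall (fun a => a < r) (map fst L1) -> Forall (eq r) (map fst L2) ->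
  Forall (fun a => r < a) (map fst L3) -> wf_point (L1 ++ L2 ++ L3) r = gprod (map snd L2).
Proof.
  intros H1 H2 H3.
  rewrite !wf_point_app, (wf_point_const (L := L2)), (wf_point_notin (L := L1)),
    (wf_point_notin (L := L3)); auto.
  - rewrite gmul1l, gmul1r; auto.
  - rewrite Forall_forall in H3. intro Hr. specialize (H3 r Hr). lra.
  - rewrite Forall_forall in H1. intro Hr. specialize (H1 r Hr). lra.
Qed.

Lemma placed_split (L : list (R * G)) r : StronglySorted Rle (map fst L) -> exists L1 L2 L3,
  L = L1 ++ L2 ++ L3 /\ Forall (fun a => a < r) (map fst L1) /\ Forall (eq r) (map fst L2) /\
  Forall (fun a => r < a) (map fst L3).
Proof.
  intro H. destruct (sorted_split r H) as [A1 [A2 [A3 [E [P1 [P2 P3]]]]]].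
  apply map_eq_app in E as [L1 [L23 [-> [<- E]]]]. apply map_eq_app in E as [L2 [L3 [-> [<- <-]]]].
  exists L1, L2, L3; auto.
Qed.

Lemma ell_wf_point (L : list (R * G)) r : reduced X (map snd L) -> StronglySorted Rle (map fst L) ->
  ell (wf_point L r) = count_occ Req_EM_T (map fst L) r.
Proof.
  intros Hred HS. destruct (placed_split r HS) as [L1 [L2 [L3 [-> [P1 [P2 P3]]]]]].
  rewrite wf_point_split by auto. rewrite !map_app in Hred |- *.
  apply reduced_app in Hred as [_ Hred]. apply reduced_app in Hred as [[_ ->] _].
  rewrite !count_occ_app, (Forall_eq_repeat P2), count_occ_repeat_eq by auto.
  rewrite !(proj1 (count_occ_not_In _ _ _)).
  - rewrite !length_map; lia.
  - rewrite Forall_forall in P3. intro Hr. specialize (P3 r Hr). lra.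
  - rewrite Forall_forall in P1. intro Hr. specialize (P1 r Hr). lra.
Qed.

Lemma wf_point_blocks (L : list (R * G)) (P : list R) : StronglySorted Rle (map fst L) ->
  StronglySorted Rlt P -> incl (map fst L) P ->
  exists BL, concat BL = map snd L /\ map (wf_point L) P = map gprod BL.
Proof.
  revert L. induction P as [|p P IH]; intros L HS HP Hinc.
  - exists []. destruct L as [|q L]; auto. exfalso. apply (Hinc (fst q)). left; auto.
  - apply StronglySorted_inv in HP as [HP Hp]. rewrite Forall_forall in Hp.
    destruct (placed_split p HS) as [L1 [L2 [L3 [-> [P1 [P2 P3]]]]]].
    destruct L1 as [|q L1].
    2: { exfalso. inversion P1 as [|? ? Hq]. destruct (Hinc (fst q)) as [E|E]; [left; auto| |].
         - lra.
         - specialize (Hp _ E). lra. }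
    simpl in HS, Hinc |- *. rewrite map_app in HS, Hinc. apply StronglySorted_app_r in HS.
    destruct (IH L3) as [BL [HB1 HB2]]; auto.
    { intros a Ha. rewrite Forall_forall in P3. specialize (P3 a Ha).
      destruct (Hinc a) as [E|E]; [apply in_or_app; auto|lra|auto]. }
    exists (map snd L2 :: BL). simpl. rewrite map_app, HB1. split; auto.
    rewrite (wf_point_split (L1 := []) (L2 := L2) (L3 := L3)) by auto. f_equal.
    rewrite <- HB2. apply map_ext_in. intros r Hr.
    rewrite wf_point_app, wf_point_notin, gmul1l; auto.
    rewrite Forall_forall in P2. intro E. specialize (P2 r E). specialize (Hp r Hr). lra.
Qed.

Lemma gprod_wf_point (L : list (R * G)) (P : list R) : StronglySorted Rle (map fst L) ->
  StronglySorted Rlt P -> incl (map fst L) P -> gprod (map (wf_point L) P) = gprod (map snd L).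
Proof.
  intros HS HP Hinc. destruct (wf_point_blocks HS HP Hinc) as [BL [<- ->]].
  rewrite gprod_concat; auto.
Qed.

Lemma sum_ell_wf_point (L : list (R * G)) (P : list R) : reduced X (map snd L) ->
  StronglySorted Rle (map fst L) -> StronglySorted Rlt P -> incl (map fst L) P ->
  fold_right Nat.add 0%nat (map ell (map (wf_point L) P)) = length L.
Proof.
  intros Hred HS HP Hinc. destruct (wf_point_blocks HS HP Hinc) as [BL [HB ->]].
  rewrite <- (length_map snd L), <- HB. rewrite <- HB in Hred. clear - Hred.
  induction BL as [|b BL IH]; simpl in *; auto.
  apply reduced_app in Hred as [[_ ->] Hred]. rewrite length_app, IH; auto.
Qed.

Lemma gprod_eq_of_wf_point_eq (L M : list (R * G)) : StronglySorted Rle (map fst L) ->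
  map fst L = map fst M -> wf_point L = wf_point M -> gprod (map snd L) = gprod (map snd M).
Proof.
  intros HS Epos Ewf. destruct (sorted_enum (map fst L) (fun _ => True)) as [P [SP HP]].
  assert (Hinc : incl (map fst L) P) by (intros r Hr; apply HP; auto).
  rewrite <- (gprod_wf_point HS SP Hinc), <- (gprod_wf_point (L := M) (P := P)), Ewf; auto;
    rewrite <- Epos; auto.
Qed.

Lemma wf_point_cancel_prefix (L1 L2 M1 M2 : list (R * G)) :
  (forall r, In r (map fst L1) -> ~ In r (map fst L2)) -> map fst L1 = map fst M1 ->
  map fst L2 = map fst M2 -> wf_point (L1 ++ L2) = wf_point (M1 ++ M2) -> wf_point L2 = wf_point M2.
Proof.
  intros Hdis E1 E2 E. apply functional_extensionality. intro r.
  pose proof (f_equal (fun f => f r) E) as Er. simpl in Er. rewrite !wf_point_app in Er.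
  destruct (in_dec Req_EM_T r (map fst L1)) as [I|I].
  - rewrite !wf_point_notin; auto. rewrite <- E2. auto.
  - rewrite (wf_point_notin (L := L1)), (wf_point_notin (L := M1)), !gmul1l in Er; auto.
    rewrite <- E1. auto.
Qed.

End PlacedWords.

Lemma skipn_length_app {A : Type} (l1 l2 : list A) : skipn (length l1) (l1 ++ l2) = l2.
Proof. rewrite skipn_app, skipn_all, Nat.sub_diag; auto. Qed.

Lemma nth_length_last {A : Type} (a d : A) (l t : list A) :
  nth (length l) (a :: l ++ t) d = last (a :: l) d.
Proof.
  revert a. induction l as [|b l IH]; intro a; auto.
  change (nth (length l) (b :: l ++ t) d = last (a :: b :: l) d). rewrite IH. auto.
Qed.

Lemma last_cons_app {A : Type} (a d : A) (l1 l2 : list A) :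
  l2 <> [] -> last (a :: l1 ++ l2) d = last l2 d.
Proof.
  intro H. destruct (exists_last H) as [l [b ->]].
  rewrite app_assoc, app_comm_cons, !last_last. auto.
Qed.

Lemma Forall_last {A : Type} (P : A -> Prop) (l : list A) d : l <> [] -> Forall P l -> P (last l d).
Proof.
  intros H HP. destruct (exists_last H) as [l' [b ->]]. rewrite last_last.
  apply Forall_app in HP as [_ HP]. inversion HP; auto.
Qed.

Lemma StronglySorted_app_rel {A : Type} (Rel : A -> A -> Prop) (l1 l2 : list A) :
  StronglySorted Rel (l1 ++ l2) -> forall a b, In a l1 -> In b l2 -> Rel a b.
Proof.
  induction l1 as [|c l1 IH]; simpl; [tauto|]. intros H a b [<-|Ha] Hb;
    apply StronglySorted_inv in H as [H1 H2].
  - rewrite Forall_forall in H2. apply H2, in_or_app; auto.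
  - apply IH; auto.
Qed.

Lemma sum_select_none {T : Type} (l : list nat) (f : nat -> T) (w : nat -> R) z :
  (forall i, In i l -> z <> f i) ->
  fold_right Rplus 0 (map (fun i => if excluded_middle_informative (z = f i) then w i else 0) l) = 0.
Proof.
  induction l as [|a l IH]; intro Hf; cbn [map fold_right]; auto.
  rewrite IH by (intros; apply Hf; simpl; auto).
  destruct (excluded_middle_informative _) as [E|E]; [exfalso; apply (Hf a); simpl; auto|lra].
Qed.

Lemma sum_select {T : Type} (l : list nat) (f : nat -> T) (w : nat -> R) z i0 :
  NoDup l -> In i0 l -> (forall i, In i l -> z = f i -> i = i0) ->
  fold_right Rplus 0 (map (fun i => if excluded_middle_informative (z = f i) then w i else 0) l) =
  if excluded_middle_informative (z = f i0) then w i0 else 0.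
Proof.
  induction l as [|a l IH]; intros ND Hin Hf; [destruct Hin|]. cbn [map fold_right].
  inversion ND as [|? ? Ha Hl]; subst. destruct Hin as [<-|Hin].
  - rewrite sum_select_none; [lra|]. intros i Hi E. apply Ha. rewrite <- (Hf i); simpl; auto.
  - rewrite IH by (simpl in Hf; auto).
    destruct (excluded_middle_informative (z = f a)) as [E|E]; [|lra].
    exfalso. apply Ha. rewrite (Hf a); simpl; auto.
Qed.

(* [0 :: A ++ [1]] lists the coordinates [Y 0, ..., Y (n+1)] of [oc_chart], so [gap A k] is the
   barycentric weight of the chain element obtained by dropping the first [k] letters. *)
Definition gap (A : list R) (k : nat) : R := nth (S k) (0 :: A ++ [1]) 0 - nth k (0 :: A ++ [1]) 0.

Lemma gap_cut (B C : list R) : gap (B ++ C) (length B) = hd 1 C - last (0 :: B) 0.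
Proof.
  unfold gap. rewrite <- app_assoc, nth_length_last. simpl nth.
  rewrite app_nth2, Nat.sub_diag by lia. destruct C; auto.
Qed.

Lemma sorted_gap_sep (B C : list R) : StronglySorted Rle (B ++ C) -> gap (B ++ C) (length B) <> 0 ->
  forall a b, In a B -> In b C -> a < b.
Proof.
  rewrite gap_cut. intros HS Hgap a b Ha Hb. destruct C as [|y C]; [destruct Hb|].
  assert (HB : B <> []) by (intros ->; destruct Ha).
  destruct (exists_last HB) as [B' [x ->]]. simpl hd in Hgap.
  rewrite app_comm_cons, last_last in Hgap. rewrite <- app_assoc in HS.
  assert (Hax : a <= x).
  { apply in_app_or in Ha as [Ha|[<-|[]]]; [|lra].
    apply (StronglySorted_app_rel HS); simpl; auto. }
  assert (Hxy : x <= y) by (apply (StronglySorted_app_rel (StronglySorted_app_r HS)); simpl; auto).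
  assert (Hyb : y <= b).
  { destruct Hb as [<-|Hb]; [lra|].
    apply StronglySorted_app_r, StronglySorted_app_r in HS. apply StronglySorted_inv in HS as [_ HS].
    rewrite Forall_forall in HS. auto. }
  lra.
Qed.

Lemma gap_before_block (A1 A2 A3 : list R) r : Forall (fun a => a < r) A1 -> Forall (eq r) A2 ->
  A1 <> [] -> A2 <> [] -> gap (A1 ++ A2 ++ A3) (length A1) <> 0.
Proof.
  intros H1 H2 N1 N2. rewrite gap_cut. pose proof (Forall_last 0 N1 H1) as Hlast.
  replace (last (0 :: A1) 0) with (last A1 0) by (destruct A1; [contradiction|auto]).
  destruct A2 as [|a A2]; [contradiction|].
  inversion H2 as [|? ? Ha]. simpl. lra.
Qed.

Lemma gap_after_block (A1 A2 A3 : list R) r : Forall (eq r) A2 -> Forall (fun a => r < a) A3 ->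
  A2 <> [] -> A3 <> [] -> gap (A1 ++ A2 ++ A3) (length (A1 ++ A2)) <> 0.
Proof.
  intros H2 H3 N2 N3. rewrite app_assoc, gap_cut, last_cons_app by auto.
  pose proof (Forall_last 0 N2 H2) as Hlast. destruct A3 as [|a A3]; [contradiction|].
  inversion H3 as [|? ? Ha]. simpl. lra.
Qed.

Lemma gap_inj (A B : list R) : length A = length B ->
  (forall k, (k <= length A)%nat -> gap A k = gap B k) -> A = B.
Proof.
  intros Hl Hk.
  assert (HE : forall j, (j <= S (length A))%nat -> nth j (0 :: A ++ [1]) 0 = nth j (0 :: B ++ [1]) 0).
  { induction j; intro Hj; auto. specialize (Hk j ltac:(lia)). specialize (IHj ltac:(lia)).
    unfold gap in Hk. lra. }
  apply nth_ext with 0 0; auto. intros j Hj. specialize (HE (S j) ltac:(lia)). simpl in HE.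
  rewrite !app_nth1 in HE by lia. auto.
Qed.

Section PlacedFactorizations.
Variables (G : Group) (X : G -> Prop).
Local Notation ell := (ell X).

Lemma oc_chart_suffix_chain (e : list G) (A : list R) z : reduced X e -> length A = length e ->
  oc_chart (suffix_chain e) (coords A) z =
  if le_dec (ell z) (length e) then
    (if excluded_middle_informative (z = gprod (skipn (length e - ell z) e))
     then gap A (length e - ell z) else 0)
  else 0.
Proof.
  intros He HA. unfold oc_chart. cbv zeta. rewrite length_suffix_chain.
  replace (S (length e) - 1)%nat with (length e) by lia.
  set (n := length e).
  assert (Hrank : forall i, In i (seq 0 (S n)) -> z = gprod (skipn (n - i) e) -> i = ell z).
  { intros i Hi ->. apply in_seq in Hi. rewrite ell_skipn; auto. fold n. lia. }
  rewrite (map_ext_in _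
    (fun i => if excluded_middle_informative (z = gprod (skipn (n - i) e)) then gap A (n - i) else 0)).
  - destruct (le_dec (ell z) n) as [Hle|Hle].
    + apply (@sum_select _ _ (fun i => gprod (skipn (n - i) e)) (fun i => gap A (n - i)));
        [apply seq_NoDup|apply in_seq; lia|auto].
    + apply sum_select_none. intros i Hi E. apply Hle. rewrite <- (Hrank i); auto. apply in_seq in Hi. lia.
  - intros i Hi. apply in_seq in Hi. rewrite nth_suffix_chain by lia. fold n.
    destruct (excluded_middle_informative _); auto. unfold gap, coords. f_equal.
    + replace (S n - i)%nat with (S (n - i)) by lia.
      destruct (Nat.eqb_spec (S (n - i)) 0); [lia|]. destruct (Nat.eqb_spec (S (n - i)) (S n)).
      * replace (n - i)%nat with n by lia. simpl. replace n with (length A) by auto.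
        rewrite app_nth2, Nat.sub_diag; auto.
      * simpl. rewrite app_nth1 by lia. f_equal. lia.
    + destruct (Nat.eqb_spec (n - i) 0) as [->|]; auto. destruct (Nat.eqb_spec (n - i) (S n)); [lia|].
      destruct (n - i)%nat as [|j] eqn:E; [lia|]. simpl. rewrite app_nth1 by lia. f_equal. lia.
Qed.

Variable g : G.

Definition placed_fact (L : list (R * G)) : Prop :=
  min_fact X g (map snd L) /\ StronglySorted Rle (map fst L) /\ Forall in01 (map fst L).

Definition oc_point (L : list (R * G)) : G -> R :=
  oc_chart (suffix_chain (map snd L)) (coords (map fst L)).

Definition same_point (L M : list (R * G)) : Prop :=
  map fst L = map fst M /\
  forall k, (k <= length L)%nat -> gap (map fst L) k <> 0 ->
    gprod (skipn k (map snd L)) = gprod (skipn k (map snd M)).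

Lemma length_placed_fact (L : list (R * G)) : placed_fact L -> length L = ell g.
Proof. intros [[_ [_ H]] _]. rewrite length_map in H; auto. Qed.

Lemma placed_fact_reduced (L : list (R * G)) : placed_fact L -> reduced X (map snd L).
Proof. intros [H _]. apply (min_fact_reduced H). Qed.

Lemma oc_point_at_suffix (L : list (R * G)) z k : placed_fact L -> (k <= length L)%nat ->
  ell z = (length L - k)%nat ->
  oc_point L z = if excluded_middle_informative (z = gprod (skipn k (map snd L)))
                 then gap (map fst L) k else 0.
Proof.
  intros HL Hk Hz. unfold oc_point.
  rewrite oc_chart_suffix_chain, !length_map
    by (auto using placed_fact_reduced; rewrite !length_map; auto).
  destruct (le_dec _ _); [|lia]. replace (length L - ell z)%nat with k by lia. auto.
Qed.

Lemma oc_point_same_point (L M : list (R * G)) : placed_fact L -> placed_fact M ->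
  oc_point L = oc_point M -> same_point L M.
Proof.
  intros HL HM E. assert (Hn : length M = length L) by (rewrite !length_placed_fact; auto).
  assert (Hgap : forall k, (k <= length L)%nat -> gap (map fst L) k = gap (map fst M) k /\
    (gap (map fst L) k <> 0 -> gprod (skipn k (map snd L)) = gprod (skipn k (map snd M)))).
  { intros k Hk. set (sL := gprod (skipn k (map snd L))). set (sM := gprod (skipn k (map snd M))).
    assert (EL : ell sL = (length L - k)%nat).
    { unfold sL. rewrite ell_skipn, length_map; auto using placed_fact_reduced. }
    assert (EM : ell sM = (length M - k)%nat).
    { unfold sM. rewrite ell_skipn, length_map; auto using placed_fact_reduced. }
    pose proof (f_equal (fun p => p sL) E) as E1. pose proof (f_equal (fun p => p sM) E) as E2.
    simpl in E1, E2.
    rewrite (oc_point_at_suffix (L := L) (k := k)), (oc_point_at_suffix (L := M) (k := k)) in E1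
      by (auto; lia).
    rewrite (oc_point_at_suffix (L := L) (k := k)), (oc_point_at_suffix (L := M) (k := k)) in E2
      by (auto; lia).
    fold sL sM in E1, E2.
    destruct (excluded_middle_informative (sL = sL)); [|congruence].
    destruct (excluded_middle_informative (sM = sM)); [|congruence].
    destruct (excluded_middle_informative (sL = sM)) as [Q|Q].
    - split; auto.
    - destruct (excluded_middle_informative (sM = sL)); [congruence|]. split; [lra|tauto]. }
  split.
  - apply gap_inj; [rewrite !length_map; auto|]. intros k Hk. apply Hgap. rewrite length_map in Hk. auto.
  - intros k Hk. apply Hgap; auto.
Qed.

Lemma same_point_oc_point (L M : list (R * G)) : placed_fact L -> placed_fact M ->
  same_point L M -> oc_point L = oc_point M.
Proof.
  intros HL HM [Epos Eskip]. assert (Hn : length M = length L) by (rewrite !length_placed_fact; auto).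
  apply functional_extensionality. intro z. unfold oc_point.
  rewrite !oc_chart_suffix_chain
    by (auto using placed_fact_reduced; rewrite !length_map; auto).
  rewrite !length_map, Hn, <- Epos. destruct (le_dec _ _); auto.
  set (k := (length L - ell z)%nat).
  destruct (Req_EM_T (gap (map fst L) k) 0) as [Z|Z].
  - rewrite Z. destruct (excluded_middle_informative _); destruct (excluded_middle_informative _); auto.
  - rewrite Eskip by (auto; unfold k; lia). auto.
Qed.

Lemma wf_point_same_point (L M : list (R * G)) : placed_fact L -> placed_fact M ->
  wf_point L = wf_point M -> same_point L M.
Proof.
  intros HL HM E. pose proof (proj1 (proj2 HL)) as HS.
  assert (Epos : map fst L = map fst M).
  { apply sorted_eq_of_count; [apply HL|apply HM|]. intro r.
    rewrite <- !(ell_wf_point (X := X)), E; auto using placed_fact_reduced; apply HM. }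
  split; auto. intros k Hk Hgap.
  assert (HLk : map fst L = map fst (firstn k L) ++ map fst (skipn k L))
    by (rewrite <- map_app, firstn_skipn; auto).
  assert (Hsep : forall a b, In a (map fst (firstn k L)) -> In b (map fst (skipn k L)) -> a < b).
  { apply sorted_gap_sep; rewrite <- HLk; auto.
    rewrite length_map, length_firstn. replace (Nat.min k (length L)) with k by lia. auto. }
  assert (Hwf : wf_point (skipn k L) = wf_point (skipn k M)).
  { apply (wf_point_cancel_prefix (L1 := firstn k L) (M1 := firstn k M)).
    - intros r Hr Hr'. specialize (Hsep r r Hr Hr'). lra.
    - rewrite <- !firstn_map, Epos; auto.
    - rewrite <- !skipn_map, Epos; auto.
    - rewrite !firstn_skipn; auto. }
  rewrite !skipn_map. apply gprod_eq_of_wf_point_eq; auto.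
  - rewrite <- skipn_map. rewrite <- (firstn_skipn k (map fst L)) in HS.
    apply StronglySorted_app_r in HS; auto.
  - rewrite <- !skipn_map, Epos; auto.
Qed.

Lemma same_point_skipn (L M : list (R * G)) k : placed_fact L -> placed_fact M -> same_point L M ->
  (k = 0%nat \/ k = length L \/ gap (map fst L) k <> 0) -> (k <= length L)%nat ->
  gprod (skipn k (map snd L)) = gprod (skipn k (map snd M)).
Proof.
  intros HL HM [Epos Eskip] Hk Hle.
  assert (Hn : length M = length L) by (rewrite !length_placed_fact; auto).
  destruct Hk as [->|[->|Hk]]; auto.
  - cbn [skipn]. destruct HL as [[_ [-> _]] _]. destruct HM as [[_ [-> _]] _]. auto.
  - rewrite !skipn_all2 by (rewrite length_map; lia). auto.
Qed.

Lemma same_point_wf_point (L M : list (R * G)) : placed_fact L -> placed_fact M ->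
  same_point L M -> wf_point L = wf_point M.
Proof.
  intros HL HM Hsame. pose proof Hsame as [Epos _]. apply functional_extensionality. intro r.
  destruct (placed_split r (proj1 (proj2 HL))) as [L1 [L2 [L3 [EL [P1 [P2 P3]]]]]].
  pose proof Epos as EM. rewrite EL, !map_app in EM. symmetry in EM.
  apply map_eq_app in EM as [M1 [M23 [EM [Q1 EM23]]]].
  apply map_eq_app in EM23 as [M2 [M3 [-> [Q2 Q3]]]].
  subst M. rewrite EL, !wf_point_split by (rewrite ?Q1, ?Q2, ?Q3; auto).
  assert (Hl1 : length M1 = length L1) by (rewrite <- (length_map fst M1), Q1, length_map; auto).
  assert (Hl2 : length M2 = length L2) by (rewrite <- (length_map fst M2), Q2, length_map; auto).
  destruct L2 as [|q L2]; [destruct M2; [auto|discriminate]|].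
  assert (Hcut1 : gprod (map snd (q :: L2) ++ map snd L3) = gprod (map snd M2 ++ map snd M3)).
  { replace (map snd (q :: L2) ++ map snd L3) with (skipn (length L1) (map snd L))
      by (rewrite EL, !map_app, <- (length_map snd L1), skipn_length_app; auto).
    replace (map snd M2 ++ map snd M3) with (skipn (length L1) (map snd (M1 ++ M2 ++ M3)))
      by (rewrite !map_app, <- Hl1, <- (length_map snd M1), skipn_length_app; auto).
    apply same_point_skipn; auto; [|rewrite EL, !length_app; lia].
    destruct L1 as [|p L1]; [left; auto|right; right].
    rewrite EL, !map_app, <- (length_map fst (p :: L1)).
    apply (gap_before_block (r := r)); auto; discriminate. }
  assert (Hcut2 : gprod (map snd L3) = gprod (map snd M3)).
  { replace (map snd L3) with (skipn (length (L1 ++ q :: L2)) (map snd L))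
      by (rewrite EL, app_assoc, map_app, <- (length_map snd (L1 ++ q :: L2)), skipn_length_app; auto).
    replace (map snd M3) with (skipn (length (L1 ++ q :: L2)) (map snd (M1 ++ M2 ++ M3)))
      by (rewrite app_assoc, map_app, !length_app, <- Hl1, <- Hl2, <- length_app,
            <- (length_map snd (M1 ++ M2)), skipn_length_app; auto).
    apply same_point_skipn; auto; [|rewrite EL, !length_app; lia].
    destruct L3 as [|p L3]; [right; left; rewrite EL, !length_app; simpl; lia|right; right].
    rewrite EL, !map_app, <- (length_map fst (L1 ++ q :: L2)), map_app.
    apply (gap_after_block (r := r)); auto; discriminate. }
  rewrite !gprod_app, Hcut2 in Hcut1. apply gmul_cancel_r in Hcut1. auto.
Qed.

End PlacedFactorizations.

Lemma map_fst_combine {A B : Type} (l : list A) (l' : list B) :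
  length l = length l' -> map fst (combine l l') = l.
Proof. revert l'. induction l; intros [|b l'] H; simpl in *; try discriminate; auto. rewrite IHl; auto. Qed.

Lemma map_snd_combine {A B : Type} (l : list A) (l' : list B) :
  length l = length l' -> map snd (combine l l') = l'.
Proof. revert l'. induction l; intros [|b l'] H; simpl in *; try discriminate; auto. rewrite IHl; auto. Qed.

Lemma combine_fst_snd {A B : Type} (L : list (A * B)) : combine (map fst L) (map snd L) = L.
Proof. induction L as [|[a b] L IH]; simpl; auto. rewrite IH; auto. Qed.

Lemma combine_map_seq {A B : Type} (w : nat -> A) (x : list B) d :
  combine (map w (seq 0 (length x))) x = map (fun i => (w i, nth i x d)) (seq 0 (length x)).
Proof.
  apply nth_ext with (w 0%nat, d) (w 0%nat, d).
  - rewrite length_combine, !length_map, length_seq. lia.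
  - intros i Hi. rewrite length_combine, length_map, length_seq, Nat.min_id in Hi.
    rewrite combine_nth by (rewrite length_map, length_seq; auto).
    set (f := fun i => (w i, nth i x d)).
    rewrite map_nth, nth_indep with (d' := f 0%nat) by (rewrite length_map, length_seq; auto).
    rewrite map_nth, seq_nth; auto.
Qed.

Lemma fold_right_map {A B C : Type} (f : B -> C -> C) (h : A -> B) c (l : list A) :
  fold_right f c (map h l) = fold_right (fun a acc => f (h a) acc) c l.
Proof. induction l; simpl; auto. rewrite IHl; auto. Qed.

Lemma flat_map_map {A B C : Type} (f : B -> list C) (h : A -> B) (l : list A) :
  flat_map f (map h l) = flat_map (fun a => f (h a)) l.
Proof. rewrite !flat_map_concat_map, map_map; auto. Qed.

Lemma StronglySorted_flat_map_repeat {A : Type} (L : list (R * A)) (m : A -> nat) :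
  StronglySorted Rle (map fst L) ->
  StronglySorted Rle (flat_map (fun p => repeat (fst p) (m (snd p))) L).
Proof.
  induction L as [|[a b] L IH]; simpl; intro H; [constructor|].
  apply StronglySorted_inv in H as [H1 H2]. specialize (IH H1). rewrite Forall_forall in H2.
  induction (m b); simpl; auto. constructor; auto. apply Forall_forall. intros y Hy.
  apply in_app_or in Hy as [Hy|Hy].
  - apply repeat_spec in Hy. lra.
  - apply in_flat_map in Hy as [[a' b'] [Hin Hy]]. apply repeat_spec in Hy. subst.
    apply H2, in_map_iff. exists (a', b'); auto.
Qed.

Lemma Forall_flat_map_repeat {A : Type} (P : R -> Prop) (L : list (R * A)) (m : A -> nat) :
  Forall P (map fst L) -> Forall P (flat_map (fun p => repeat (fst p) (m (snd p))) L).
Proof.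
  rewrite !Forall_forall. intros H y Hy. apply in_flat_map in Hy as [[a b] [Hin Hy]].
  apply repeat_spec in Hy. subst. apply H, in_map_iff. exists (a, b); auto.
Qed.

Section Refinement.
Variables (G : Group) (X : G -> Prop) (g : G).
Local Notation "1g" := (gone G).
Local Notation ell := (ell X).

Definition placed_entries (x : list G) (s : nat -> R) : list (R * G) :=
  combine (map (wpos x s) (seq 0 (length x))) x.

Lemma wf_chart_placed_entries (x : list G) s : wf_chart x s = wf_point (placed_entries x s).
Proof.
  apply functional_extensionality. intro r.
  unfold wf_chart, wf_point, placed_entries. rewrite (combine_map_seq _ _ 1g), fold_right_map. auto.
Qed.

Lemma wf_emb_placed_entries (x : list G) s :
  wf_emb X x s = coords (flat_map (fun p => repeat (fst p) (ell (snd p))) (placed_entries x s)).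
Proof. unfold wf_emb, coords, placed_entries. rewrite (combine_map_seq _ _ 1g), flat_map_map. auto. Qed.

Lemma letters_placed_entries (x : list G) s : map snd (placed_entries x s) = x.
Proof. apply map_snd_combine. rewrite length_map, length_seq; auto. Qed.

Lemma positions_placed_entries (x : list G) s : (2 <= length x)%nat ->
  map fst (placed_entries x s) = 0 :: map s (seq 1 (length x - 2)) ++ [1].
Proof.
  intro H. unfold placed_entries. rewrite map_fst_combine by (rewrite length_map, length_seq; auto).
  replace (length x) with (S (length x - 2) + 1)%nat at 1 by lia.
  rewrite seq_app, map_app. simpl. unfold wpos at 1. simpl. f_equal.
  f_equal.
  - apply map_ext_in. intros i Hi. apply in_seq in Hi. unfold wpos.
    destruct (Nat.eqb_spec i 0); [lia|]. destruct (Nat.eqb_spec i (length x - 1)); [lia|]. auto.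
  - simpl. unfold wpos. destruct (Nat.eqb_spec (S (length x - 2)) 0); [lia|].
    destruct (Nat.eqb_spec (S (length x - 2)) (length x - 1)); [auto|lia].
Qed.

Lemma positions_placed_entries_sorted (x : list G) s :
  (2 <= length x)%nat -> orthoscheme (length x - 2) s ->
  StronglySorted Rle (map fst (placed_entries x s)) /\ Forall in01 (map fst (placed_entries x s)).
Proof.
  intros H Ho. rewrite positions_placed_entries by auto.
  set (A := map s (seq 1 (length x - 2))).
  assert (HA : orthoscheme (length A) (coords A)).
  { unfold A at 1. rewrite length_map, length_seq. destruct Ho as [O1 O2]. split.
    - intros j Hj. unfold A. rewrite coords_map_seq by lia. auto.
    - intros j Hj. unfold A. rewrite !coords_map_seq by lia. auto. }
  apply orthoscheme_coords in HA as [S1 F1].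
  assert (F0 : Forall (fun a => 0 <= a) A) by (eapply Forall_impl; [|exact F1]; intros a [? _]; auto).
  assert (F1' : Forall (fun a => a <= 1) A) by (eapply Forall_impl; [|exact F1]; intros a [_ ?]; auto).
  split.
  - constructor; [apply StronglySorted_snoc; auto|].
    apply Forall_app. split; auto. repeat constructor; lra.
  - constructor; [unfold in01; lra|]. apply Forall_app; split; auto. repeat constructor; lra.
Qed.

Definition min_word (y : G) : list G := epsilon (inhabits []) (min_fact X y).

Lemma min_word_spec (y : G) : InMon X y -> min_fact X y (min_word y).
Proof. intro H. unfold min_word. apply epsilon_spec, ell_witness; auto. Qed.

Definition refine_atoms (L : list (R * G)) : list (R * G) :=
  flat_map (fun p => map (pair (fst p)) (min_word (snd p))) L.

Lemma letters_refine_atoms (L : list (R * G)) :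
  map snd (refine_atoms L) = concat (map min_word (map snd L)).
Proof.
  induction L as [|[a b] L IH]; simpl; auto. rewrite map_app, IH, map_map. simpl. rewrite map_id. auto.
Qed.

Lemma positions_refine_atoms (L : list (R * G)) : Forall (InMon X) (map snd L) ->
  map fst (refine_atoms L) = flat_map (fun p => repeat (fst p) (ell (snd p))) L.
Proof.
  induction L as [|[a b] L IH]; simpl; auto. intro H. apply Forall_cons_iff in H as [Hb H]. simpl in Hb.
  rewrite map_app, IH, map_map by auto. simpl. f_equal.
  destruct (min_word_spec Hb) as [_ [_ <-]]. clear.
  induction (min_word b); simpl; auto. rewrite IHl; auto.
Qed.

Lemma wf_point_refine_atoms (L : list (R * G)) :
  Forall (InMon X) (map snd L) -> wf_point (refine_atoms L) = wf_point L.
Proof.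
  intro H. apply functional_extensionality. intro r.
  induction L as [|[a b] L IH]; simpl; auto. apply Forall_cons_iff in H as [Hb H]. simpl in Hb.
  rewrite wf_point_app, IH by auto. destruct (min_word_spec Hb) as [_ [Hp _]].
  destruct (Req_EM_T a r) as [<-|Ne].
  - rewrite wf_point_const, map_map, map_id, Hp; auto.
    rewrite map_map. apply Forall_forall. intros t Ht. apply in_map_iff in Ht as [? [<- _]]. auto.
  - rewrite wf_point_notin, gmul1l; auto. rewrite map_map. intro Hin.
    apply in_map_iff in Hin as [t [E _]]. auto.
Qed.

Lemma concat_min_words (xs : list G) : Forall (InMon X) xs ->
  Forall X (concat (map min_word xs)) /\ gprod (concat (map min_word xs)) = gprod xs /\
  length (concat (map min_word xs)) = fold_right Nat.add 0%nat (map ell xs).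
Proof.
  induction xs as [|y xs IH]; simpl; auto. intro H. apply Forall_cons_iff in H as [Hy H].
  destruct (IH H) as [A [B C]]. destruct (min_word_spec Hy) as [A' [B' C']].
  rewrite gprod_app, length_app, B, B', C, C'. split; auto. apply Forall_app; auto.
Qed.

Lemma refine_atoms_cell (x : list G) s : lin_fact X g x -> orthoscheme (length x - 2) s ->
  placed_fact X g (refine_atoms (placed_entries x s)) /\
  wf_point (refine_atoms (placed_entries x s)) = wf_chart x s /\
  coords (map fst (refine_atoms (placed_entries x s))) = wf_emb X x s /\
  map snd (refine_atoms (placed_entries x s)) = concat (map min_word x).
Proof.
  intros [H2 [HM [_ [Hs Hp]]]] Ho.
  assert (HMl : Forall (InMon X) (map snd (placed_entries x s)))
    by (rewrite letters_placed_entries; auto).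
  destruct (positions_placed_entries_sorted H2 Ho) as [S1 F1].
  destruct (concat_min_words HM) as [A [B C]].
  rewrite letters_refine_atoms, letters_placed_entries, positions_refine_atoms by auto.
  split; [|split; [|split]]; auto.
  - split; [|split].
    + split; [|split]; rewrite letters_refine_atoms, letters_placed_entries;
        [auto|rewrite B|rewrite C]; auto.
    + rewrite positions_refine_atoms by auto. apply StronglySorted_flat_map_repeat; auto.
    + rewrite positions_refine_atoms by auto. apply Forall_flat_map_repeat; auto.
  - rewrite wf_point_refine_atoms, wf_chart_placed_entries; auto.
  - rewrite wf_emb_placed_entries; auto.
Qed.

End Refinement.

Lemma combine_map_self {A B : Type} (f : A -> B) (P : list A) :
  combine P (map f P) = map (fun r => (r, f r)) P.
Proof. induction P; simpl; auto. rewrite IHP; auto. Qed.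

Lemma StronglySorted_bracket (s : list R) : StronglySorted Rlt s -> Forall (fun r => 0 < r < 1) s ->
  StronglySorted Rlt (0 :: s ++ [1]).
Proof.
  intros Hs Hin. constructor.
  - apply StronglySorted_snoc; auto. eapply Forall_impl; [|exact Hin]. intros a Ha; lra.
  - apply Forall_app. split; [eapply Forall_impl; [|exact Hin]; intros a Ha; lra|repeat constructor; lra].
Qed.

Lemma orthoscheme_ext n (y y' : nat -> R) : orthoscheme n y ->
  (forall j, (1 <= j <= n)%nat -> y' j = y j) -> orthoscheme n y'.
Proof. intros [H1 H2] E. split; intros j Hj; rewrite ?E by lia; [apply H1|apply H2]; lia. Qed.

Lemma rsum_ext (f f' : nat -> R) m : (forall j, (1 <= j <= m)%nat -> f j = f' j) -> rsum f m = rsum f' m.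
Proof. induction m; intro H; simpl; auto. rewrite IHm, H; auto; intros; try apply H; lia. Qed.

Lemma eucl_ext m (a a' b b' : nat -> R) : (forall j, (1 <= j <= m)%nat -> a j = a' j) ->
  (forall j, (1 <= j <= m)%nat -> b j = b' j) -> eucl m a b = eucl m a' b'.
Proof. intros Ha Hb. unfold eucl. f_equal. apply rsum_ext. intros j Hj. rewrite Ha, Hb; auto. Qed.

Lemma oc_chart_ext (G : Group) (c : list G) (y y' : nat -> R) :
  (forall j, (1 <= j <= length c - 1)%nat -> y j = y' j) -> oc_chart c y = oc_chart c y'.
Proof.
  intro H. set (k := (length c - 1)%nat) in H.
  assert (HY : forall j, (j <= S k)%nat ->
    (if Nat.eqb j 0 then 0 else if Nat.eqb j (S k) then 1 else y j) =
    (if Nat.eqb j 0 then 0 else if Nat.eqb j (S k) then 1 else y' j)).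
  { intros j Hj. destruct (Nat.eqb_spec j 0); auto. destruct (Nat.eqb_spec j (S k)); auto. apply H. lia. }
  apply functional_extensionality. intro z. unfold oc_chart. fold k. f_equal.
  apply map_ext_in. intros i Hi. apply in_seq in Hi.
  destruct (excluded_middle_informative _); auto. rewrite !HY by lia. auto.
Qed.

Section Cells.
Variables (G : Group) (X : G -> Prop) (g : G).
Hypothesis Hcc : conj_closed X.
Local Notation "1g" := (gone G).
Local Notation ell := (ell X).

Lemma wfact_cell (u : R -> G) : is_wfact X g u ->
  exists x s, lin_fact X g x /\ orthoscheme (length x - 2) s /\ u = wf_chart x s.
Proof.
  intros [Hout [sl [SSl [Fl [Hiff Hlf]]]]].
  set (P := 0 :: sl ++ [1]).
  assert (Ex : u 0 :: map u sl ++ [u 1] = map u P) by (unfold P; simpl; rewrite map_app; auto).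
  assert (Hlx : (length (map u P) - 2 = length sl)%nat)
    by (unfold P; simpl; rewrite length_map, length_app; simpl; lia).
  exists (map u P), (coords sl). rewrite <- Ex. split; auto. rewrite Ex, Hlx. split.
  { apply orthoscheme_coords. split; [apply StronglySorted_lt_le; auto|].
    eapply Forall_impl; [|exact Fl]. intros a Ha; unfold in01; lra. }
  assert (HP : StronglySorted Rlt P) by (apply StronglySorted_bracket; auto).
  rewrite wf_chart_placed_entries, <- (combine_fst_snd (placed_entries _ _)).
  rewrite positions_placed_entries, letters_placed_entries, Hlx, map_coords_seq, combine_map_self
    by (unfold P; rewrite length_map; simpl; rewrite length_app; simpl; lia).
  apply functional_extensionality. intro r. fold P.
  destruct (in_dec Req_EM_T r P) as [Hin|Hnin].
  - symmetry. apply wf_point_graph; auto. apply StronglySorted_lt_NoDup; auto.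
  - rewrite wf_point_notin by (rewrite map_map; simpl; rewrite map_id; auto).
    destruct (classic (0 <= r <= 1)) as [H01|H01]; [|apply Hout; auto].
    destruct (Req_EM_T r 0) as [->|N0]; [exfalso; apply Hnin; left; auto|].
    destruct (Req_EM_T r 1) as [->|N1].
    { exfalso; apply Hnin; right; apply in_or_app; right; left; auto. }
    apply NNPP. intro E. apply Hnin. right. apply in_or_app. left. apply Hiff; auto. lra.
Qed.

Lemma wf_point_neq1 (L : list (R * G)) r : placed_fact X g L -> wf_point L r <> 1g <-> In r (map fst L).
Proof.
  intro HL. rewrite (count_occ_In Req_EM_T). pose proof (placed_fact_reduced HL) as Hred.
  rewrite <- (ell_wf_point (X := X)) by (auto; apply HL). split.
  - intro H. destruct (Nat.eq_dec (ell (wf_point L r)) 0) as [E|E]; [|lia].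
    exfalso. apply H, (ell_eq0 (X := X)); auto. apply InMon_wf_point, Hred.
  - intros H E. rewrite E, ell_one in H. lia.
Qed.

Lemma wf_point_is_wfact (L : list (R * G)) : placed_fact X g L -> is_wfact X g (wf_point L).
Proof.
  intro HL. pose proof HL as [[HX [Hprod Hlen]] [HS HF]]. pose proof (placed_fact_reduced HL) as Hred.
  rewrite Forall_forall in HF.
  destruct (sorted_enum (map fst L) (fun r => 0 < r < 1)) as [s [Ss Hs]].
  assert (Hsin : Forall (fun r => 0 < r < 1) s) by (apply Forall_forall; intros r Hr; apply Hs; auto).
  assert (HP : StronglySorted Rlt (0 :: s ++ [1])) by (apply StronglySorted_bracket; auto).
  assert (Hinc : incl (map fst L) (0 :: s ++ [1])).
  { intros r Hr. destruct (HF r Hr) as [[Hr0|<-] [Hr1| ->]]; simpl; auto.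
    - right. apply in_or_app. left. apply Hs. auto.
    - right. apply in_or_app. right. left. auto. }
  split; [intros r Hr; apply wf_point_notin; intro Hin; apply Hr, HF; auto|].
  exists s. split; [|split; [|split]]; auto.
  - intros r Hr. rewrite wf_point_neq1, Hs by auto. tauto.
  - replace (wf_point L 0 :: map (wf_point L) s ++ [wf_point L 1]) with (map (wf_point L) (0 :: s ++ [1]))
      by (simpl; rewrite map_app; auto).
    split; [|split; [|split; [|split]]].
    + simpl. rewrite length_map, length_app. simpl. lia.
    + apply Forall_forall. intros y Hy. apply in_map_iff in Hy as [r [<- _]]. apply InMon_wf_point; auto.
    + intros i Hi. rewrite length_map in Hi. simpl in Hi. rewrite length_app in Hi. simpl in Hi.
      destruct i as [|i]; [lia|]. simpl. rewrite map_app, app_nth1 by (rewrite length_map; lia).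
      rewrite nth_indep with (d' := wf_point L 0) by (rewrite length_map; lia). rewrite map_nth.
      assert (Hi' : In (nth i s 0) s) by (apply nth_In; lia).
      apply wf_point_neq1, Hs; auto.
    + rewrite sum_ell_wf_point; auto. rewrite <- Hlen, length_map. auto.
    + rewrite gprod_wf_point; auto.
Qed.

Definition atom_cell (L : list (R * G)) : list G := 1g :: map snd L ++ [1g].

Lemma placed_entries_atom_cell (L : list (R * G)) :
  placed_entries (atom_cell L) (coords (map fst L)) = (0, 1g) :: L ++ [(1, 1g)].
Proof.
  assert (Hl : (length (atom_cell L) - 2 = length (map fst L))%nat).
  { unfold atom_cell. simpl. rewrite length_app, !length_map. simpl. lia. }
  rewrite <- (combine_fst_snd (placed_entries _ _)), positions_placed_entries, letters_placed_entries, Hl,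
    map_coords_seq by (unfold atom_cell; simpl; rewrite length_app; simpl; lia).
  unfold atom_cell. simpl. f_equal. clear. induction L as [|[a b] L IH]; simpl; auto. rewrite IH; auto.
Qed.

Lemma lin_fact_atom_cell (L : list (R * G)) : placed_fact X g L -> lin_fact X g (atom_cell L).
Proof.
  intro HL. pose proof (placed_fact_reduced HL) as Hred. destruct HL as [[HX [Hp Hn]] _].
  unfold atom_cell. split; [|split; [|split; [|split]]].
  - simpl. rewrite length_app. simpl. lia.
  - constructor; [apply InMon_one|]. apply Forall_app. split; [|repeat constructor; apply InMon_one].
    eapply Forall_impl; [|exact HX]. apply InMon_letter.
  - intros i Hi. simpl in Hi. rewrite length_app, length_map in Hi. simpl in Hi.
    destruct i as [|i]; [lia|]. simpl. rewrite app_nth1 by (rewrite length_map; lia).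
    apply (reduced_letter_neq1 Hred), nth_In. rewrite length_map. lia.
  - simpl. rewrite ell_one, map_app, fold_right_app. simpl. rewrite ell_one, <- Hn.
    rewrite <- (sum_ell_reduced Hred). clear. induction (map snd L); simpl; auto.
  - simpl. rewrite gprod_app. simpl. rewrite !gmul1r, gmul1l. auto.
Qed.

Lemma atom_cell_spec (L : list (R * G)) : placed_fact X g L ->
  lin_fact X g (atom_cell L) /\ orthoscheme (length (atom_cell L) - 2) (coords (map fst L)) /\
  wf_chart (atom_cell L) (coords (map fst L)) = wf_point L /\
  wf_emb X (atom_cell L) (coords (map fst L)) = coords (map fst L).
Proof.
  intro HL. pose proof (placed_fact_reduced HL) as Hred.
  split; [apply lin_fact_atom_cell; auto|split; [|split]].
  - replace (length (atom_cell L) - 2)%nat with (length (map fst L))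
      by (unfold atom_cell; simpl; rewrite length_app, !length_map; simpl; lia).
    apply orthoscheme_coords. split; apply HL.
  - rewrite wf_chart_placed_entries, placed_entries_atom_cell. apply functional_extensionality. intro r.
    simpl. rewrite wf_point_app. simpl.
    destruct (Req_EM_T 0 r); destruct (Req_EM_T 1 r); rewrite ?gmul1l, ?gmul1r; auto.
  - rewrite wf_emb_placed_entries, placed_entries_atom_cell. simpl. rewrite ell_one, flat_map_app.
    simpl. rewrite ell_one, app_nil_r. f_equal.
    assert (Hat : forall p, In p L -> ell (snd p) = 1%nat).
    { intros p Hp. apply (ell_reduced_letter Hred), in_map; auto. }
    clear - Hat. induction L as [|p L IH]; simpl; auto.
    rewrite (Hat p) by (simpl; auto). rewrite IH by (intros; apply Hat; simpl; auto). auto.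
Qed.

Lemma chain_cell (e : list G) (y : nat -> R) : min_fact X g e -> orthoscheme (length e) y ->
  placed_fact X g (combine (map y (seq 1 (length e))) e) /\
  oc_point (combine (map y (seq 1 (length e))) e) = oc_chart (suffix_chain e) y /\
  (forall j, (1 <= j <= length e)%nat ->
     coords (map fst (combine (map y (seq 1 (length e))) e)) j = y j).
Proof.
  intros He Ho. set (A := map y (seq 1 (length e))).
  assert (HlA : length A = length e) by (unfold A; rewrite length_map, length_seq; auto).
  assert (Hcoords : forall j, (1 <= j <= length e)%nat -> coords A j = y j)
    by (intros; apply coords_map_seq; auto).
  unfold oc_point. rewrite map_fst_combine, map_snd_combine by auto. split; [|split]; auto.
  - split; [rewrite map_snd_combine; auto|]. rewrite map_fst_combine by auto.
    apply orthoscheme_coords. rewrite HlA. eapply orthoscheme_ext; eauto.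
  - apply oc_chart_ext. rewrite length_suffix_chain. intros j Hj. apply Hcoords. lia.
Qed.

Lemma oc_point_in_Og (L : list (R * G)) : placed_fact X g L -> pts (Og_complex X g) (oc_point L).
Proof.
  intro HL. exists (suffix_chain (map snd L)), (coords (map fst L)). split; [|split]; auto.
  - apply suffix_chain_max; auto. apply HL.
  - rewrite length_suffix_chain. replace (S (length (map snd L)) - 1)%nat with (length (map fst L))
      by (rewrite !length_map; lia).
    apply orthoscheme_coords. split; apply HL.
Qed.

End Cells.

Section Transfer.
Variables (P Q : Type) (K : pecomplex P) (L : pecomplex Q) (rel : P -> Q -> Prop).

Lemma string_len_pts p p' d : string_len K p p' d -> pts K p.
Proof. intro H; destruct H; auto. Qed.

Lemma string_len_transfer :
  (forall p, pts K p -> exists q, rel p q) ->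
  (forall p q q', rel p q -> rel p q' -> q = q') ->
  (forall p q, rel p q -> pts L q) ->
  (forall p p' q q' d, rel p q -> rel p' q' -> cell_step K p p' d -> cell_step L q q' d) ->
  forall p p' d, string_len K p p' d -> forall q q', rel p q -> rel p' q' -> string_len L q q' d.
Proof.
  intros Htot Hfun Hpts Hstep p p' d H.
  induction H as [p Hp|p p'' p' d e Hp Hcs Hsl IH]; intros q q' Hq Hq'.
  - rewrite (Hfun _ _ _ Hq' Hq). apply sl_nil. exact (Hpts _ _ Hq).
  - destruct (Htot p'' (string_len_pts Hsl)) as [q'' Hq''].
    apply sl_cons with q''; [exact (Hpts _ _ Hq)|apply (Hstep p p''); auto|apply IH; auto].
Qed.

End Transfer.

Lemma isometric_of_cell_step_bijection P Q (K : pecomplex P) (L : pecomplex Q) (rel : P -> Q -> Prop) :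
  inhabited Q ->
  (forall p, pts K p -> exists q, rel p q) -> (forall q, pts L q -> exists p, rel p q) ->
  (forall p q, rel p q -> pts K p /\ pts L q) ->
  (forall p q q', rel p q -> rel p q' -> q = q') -> (forall p p' q, rel p q -> rel p' q -> p = p') ->
  (forall p p' q q' d, rel p q -> rel p' q' -> cell_step K p p' d -> cell_step L q q' d) ->
  (forall p p' q q' d, rel p q -> rel p' q' -> cell_step L q q' d -> cell_step K p p' d) ->
  isometric K L.
Proof.
  intros HQ Htot Hsurj Hpts Hfun Hinj Hfwd Hbwd.
  set (f := fun p => epsilon HQ (rel p)).
  assert (Hf : forall p, pts K p -> rel p (f p)) by (intros p Hp; apply epsilon_spec, Htot; auto).
  exists f. split; [|split; [|split]].
  - intros p Hp. apply (Hpts p), Hf; auto.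
  - intros p p' Hp Hp' E. apply (Hinj p p' (f p)); [apply Hf; auto|rewrite E; apply Hf; auto].
  - intros q Hq. destruct (Hsurj q Hq) as [p Hp]. exists p. split; [apply (Hpts p q); auto|].
    apply (Hfun p); auto. apply Hf, (Hpts p q); auto.
  - intros p p' Hp Hp'. unfold pe_dist. f_equal. apply functional_extensionality. intro d.
    apply propositional_extensionality. split; intro H.
    + refine (string_len_transfer (K := L) (L := K) (rel := fun q p => rel p q) _ _ _ _ H _ _).
      * intros q Hq. destruct (Hsurj q Hq) as [p'' ?]. eauto.
      * intros q p1 p2 H1 H2. apply (Hinj p1 p2 q); auto.
      * intros q p1 H1. apply (Hpts p1 q); auto.
      * intros q q' p1 p2 d' H1 H2. apply Hbwd; auto.
      * apply Hf; auto.
      * apply Hf; auto.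
    + refine (string_len_transfer (K := K) (L := L) (rel := rel) Htot Hfun _ Hfwd H _ _).
      * intros p1 q H1. apply (Hpts p1 q); auto.
      * apply Hf; auto.
      * apply Hf; auto.
Qed.

Section Correspondence.
Variables (G : Group) (X : G -> Prop) (g : G).
Hypotheses (Hcc : conj_closed X) (Hg : InMon X g).

Definition represents (p : G -> R) (u : R -> G) : Prop :=
  exists L, placed_fact X g L /\ p = oc_point L /\ u = wf_point L.

Lemma represents_Og_total (p : G -> R) : pts (Og_complex X g) p -> exists u, represents p u.
Proof.
  intros [c [y [Hc [Ho <-]]]]. destruct (max_chain_suffix_chain Hcc Hg Hc) as [e [He ->]].
  rewrite length_suffix_chain in Ho. replace (S (length e) - 1)%nat with (length e) in Ho by lia.
  destruct (chain_cell He Ho) as [HL [HO _]].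
  eexists; exists (combine (map y (seq 1 (length e))) e); eauto.
Qed.

Lemma represents_WFact_total (u : R -> G) : is_wfact X g u -> exists p, represents p u.
Proof.
  intro H. destruct (wfact_cell H) as [x [s [Hx [Hs ->]]]].
  destruct (refine_atoms_cell Hx Hs) as [HL [HU _]].
  eexists; exists (refine_atoms X (placed_entries x s)); eauto.
Qed.

Lemma represents_functional (p : G -> R) (u u' : R -> G) : represents p u -> represents p u' -> u = u'.
Proof.
  intros [L [HL [-> ->]]] [M [HM [E ->]]].
  apply (same_point_wf_point HL HM), (oc_point_same_point HL HM); auto.
Qed.

Lemma represents_injective (p p' : G -> R) (u : R -> G) : represents p u -> represents p' u -> p = p'.
Proof.
  intros [L [HL [-> ->]]] [M [HM [-> E]]].
  apply (same_point_oc_point HL HM), (wf_point_same_point HL HM); auto.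
Qed.

Lemma represents_pts (p : G -> R) (u : R -> G) :
  represents p u -> pts (Og_complex X g) p /\ is_wfact X g u.
Proof. intros [L [HL [-> ->]]]. split; [apply oc_point_in_Og|apply wf_point_is_wfact]; auto. Qed.

Lemma cell_step_Og_WFact p q u v d : represents p u -> represents q v ->
  cell_step (Og_complex X g) p q d -> cell_step (WFact_complex X g) u v d.
Proof.
  intros Rp Rq [c [a [b [Hc [Ha [Hb [Ea [Eb Ed]]]]]]]].
  cbn [amb emb dom chart is_cell Og_complex WFact_complex] in *.
  destruct (max_chain_suffix_chain Hcc Hg Hc) as [e [He ->]].
  rewrite length_suffix_chain in Ha, Hb, Ed.
  replace (S (length e) - 1)%nat with (length e) in Ha, Hb, Ed by lia.
  destruct (chain_cell He Ha) as [Ga [Oa Aa]]. destruct (chain_cell He Hb) as [Gb [Ob Ab]].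
  set (La := combine (map a (seq 1 (length e))) e) in *.
  set (Lb := combine (map b (seq 1 (length e))) e) in *.
  assert (Sa : map snd La = e) by (apply map_snd_combine; rewrite length_map, length_seq; auto).
  assert (Sb : map snd Lb = e) by (apply map_snd_combine; rewrite length_map, length_seq; auto).
  rewrite (represents_functional Rp (u' := wf_point La)) by (exists La; subst p; auto).
  rewrite (represents_functional Rq (u' := wf_point Lb)) by (exists Lb; subst q; auto).
  destruct (atom_cell_spec Ga) as [C1 [C2 [C3 C4]]]. destruct (atom_cell_spec Gb) as [D1 [D2 [D3 D4]]].
  exists (atom_cell La), (coords (map fst La)), (coords (map fst Lb)).
  cbn [amb emb dom chart is_cell WFact_complex].
  unfold atom_cell in *. rewrite Sa in C1, C2, C3, C4 |- *. rewrite Sb in D1, D2, D3, D4.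
  split; [|split; [|split; [|split; [|split]]]]; auto.
  rewrite C4, D4, Ed. destruct He as [_ [_ <-]]. apply eucl_ext; intros; symmetry; auto.
Qed.

Lemma cell_step_WFact_Og p q u v d : represents p u -> represents q v ->
  cell_step (WFact_complex X g) u v d -> cell_step (Og_complex X g) p q d.
Proof.
  intros Rp Rq [x [s [t [Hx [Hs [Ht [Es [Et Ed]]]]]]]].
  cbn [amb emb dom chart is_cell Og_complex WFact_complex] in *.
  destruct (refine_atoms_cell Hx Hs) as [Gs [Us [As Ss]]].
  destruct (refine_atoms_cell Hx Ht) as [Gt [Ut [At St]]].
  set (Ls := refine_atoms X (placed_entries x s)) in *.
  set (Lt := refine_atoms X (placed_entries x t)) in *.
  rewrite (represents_injective Rp (p' := oc_point Ls)) by (exists Ls; subst u; auto).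
  rewrite (represents_injective Rq (p' := oc_point Lt)) by (exists Lt; subst v; auto).
  set (e := concat (map (min_word X) x)) in *.
  assert (He : min_fact X g e) by (rewrite <- Ss; apply Gs).
  exists (suffix_chain e), (coords (map fst Ls)), (coords (map fst Lt)).
  cbn [amb emb dom chart is_cell Og_complex].
  rewrite length_suffix_chain. replace (S (length e) - 1)%nat with (length e) by lia.
  split; [|split; [|split; [|split; [|split]]]].
  - apply suffix_chain_max; auto.
  - replace (length e) with (length (map fst Ls)) by (rewrite length_map, <- Ss, length_map; auto).
    apply orthoscheme_coords. split; apply Gs.
  - replace (length e) with (length (map fst Lt)) by (rewrite length_map, <- St, length_map; auto).
    apply orthoscheme_coords. split; apply Gt.
  - unfold oc_point. rewrite Ss. auto.
  - unfold oc_point. rewrite St. auto.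
  - rewrite Ed, <- As, <- At. destruct He as [_ [_ ->]]. auto.
Qed.

End Correspondence.

Unset Implicit Arguments.
Theorem proposition4p6 (G : Group) (X : G -> Prop) (g : G) :
  generates X -> conj_closed X -> InMon X g ->
  isometric (Og_complex X g) (WFact_complex X g).
Proof.
  intros _ Hcc Hg.
  apply (isometric_of_cell_step_bijection (rel := represents X g)).
  - exact (inhabits (fun _ => gone G)).
  - apply represents_Og_total; auto.
  - apply represents_WFact_total.
  - apply represents_pts; auto.
  - apply represents_functional.
  - apply represents_injective.
  - intros; eapply cell_step_Og_WFact; eauto.
  - intros; eapply cell_step_WFact_Og; eauto.
Qed.
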